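(* Let $n\geq 1$ be an integer, let $\mu\in\mathbb{C}$ with $\mu\neq 0$ and $\operatorname{Re}(\mu)<n$, and let $\lambda\in\mathbb{C}$ with $0<|\lambda|\leq 1$. Suppose $p\in\mathcal{H}[1,n]$ satisfies $$p(z)-\frac{1}{\mu}\,z p'(z)\prec 1+\lambda z \qquad (z\in\mathbb{U}).$$ Then $p(z)\prec 1+\lambda_1 z$ $(z\in\mathbb{U})$ for every complex number $\lambda_1$ with $$|\lambda_1|=|\lambda|\,\frac{|\mu|}{|n-\mu|};$$ equivalently, $|p(z)-1|<|\lambda|\,|\mu|/|n-\mu|$ for all $z\in\mathbb{U}$.
   Context: $\mathbb{U}=\{z\in\mathbb{C}:|z|<1\}$. For $a_0\in\mathbb{C}$ and an integer $n\geq1$, $\mathcal{H}[a_0,n]$ denotes the class of functions analytic in $\mathbb{U}$ of the form $p(z)=a_0+\sum_{k=n}^\infty a_k z^k$. For $f,g$ analytic in $\mathbb{U}$, $f\prec g$ ($f$ is subordinate to $g$) means there is an analytic $w$ in $\mathbb{U}$ with $w(0)=0$, $|w(z)|<1$ on $\mathbb{U}$, and $f(z)=g(w(z))$; when $g$ is univalent this is equivalent to $f(0)=g(0)$ and $f(\mathbb{U})\subset g(\mathbb{U})$. In particular, for $\lambda\neq 0$, $q\prec 1+\lambda z$ means $q(0)=1$ and $|q(z)-1|<|\lambda|$ on $\mathbb{U}$. *)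

From Stdlib Require Export Reals.
Open Scope R_scope.

Definition Cx : Type := (R * R)%type.
Definition RtoC (x : R) : Cx := (x, 0).
Definition Cz0 : Cx := (0, 0).
Definition Cone : Cx := (1, 0).
Definition Cadd (z w : Cx) : Cx := (fst z + fst w, snd z + snd w).
Definition Copp (z : Cx) : Cx := (- fst z, - snd z).
Definition Csub (z w : Cx) : Cx := Cadd z (Copp w).
Definition Cmul (z w : Cx) : Cx :=
  (fst z * fst w - snd z * snd w, fst z * snd w + snd z * fst w).
Definition Cinv (z : Cx) : Cx :=
  (fst z / (fst z ^ 2 + snd z ^ 2), - snd z / (fst z ^ 2 + snd z ^ 2)).
Definition Cdiv (z w : Cx) : Cx := Cmul z (Cinv w).
Definition Re (z : Cx) : R := fst z.
Definition Cmod (z : Cx) : R := sqrt (fst z ^ 2 + snd z ^ 2).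
Fixpoint Cpow (z : Cx) (k : nat) : Cx :=
  match k with O => Cone | S k' => Cmul z (Cpow z k') end.

Fixpoint Csum (f : nat -> Cx) (N : nat) : Cx :=
  match N with O => f O | S N' => Cadd (Csum f N') (f (S N')) end.

Definition Cseries_cv (f : nat -> Cx) (l : Cx) : Prop :=
  Un_cv (fun N => fst (Csum f N)) (fst l) /\ Un_cv (fun N => snd (Csum f N)) (snd l).

Definition inU (z : Cx) : Prop := Cmod z < 1.

Definition analytic_U (f : Cx -> Cx) : Prop :=
  exists a : nat -> Cx, forall z, inU z -> Cseries_cv (fun k => Cmul (a k) (Cpow z k)) (f z).

Definition in_H (a0 : Cx) (n : nat) (p : Cx -> Cx) : Prop :=
  exists a : nat -> Cx,
    a O = a0 /\ (forall k, (1 <= k < n)%nat -> a k = Cz0) /\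
    (forall z, inU z -> Cseries_cv (fun k => Cmul (a k) (Cpow z k)) (p z)).

Definition Cderiv_at (f : Cx -> Cx) (z l : Cx) : Prop :=
  forall eps, 0 < eps -> exists delta, 0 < delta /\
    forall h, 0 < Cmod h < delta ->
      Cmod (Csub (Cdiv (Csub (f (Cadd z h)) (f z)) h) l) < eps.

Definition subord (f g : Cx -> Cx) : Prop :=
  exists w : Cx -> Cx, analytic_U w /\ w Cz0 = Cz0 /\
    (forall z, inU z -> Cmod (w z) < 1) /\
    (forall z, inU z -> f z = g (w z)).

(* Write p = 1 + z^n Q with Q a power series of radius >= 1.  As
   z p' = z^n (n Q + z Q'), the hypothesis p - z p'/mu = 1 + lambda w (|w| < 1) reads
   |z|^n |nu Q - z Q'| < |mu||lambda| with nu := mu - n, Re nu < 0.  A Jack-type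
   argument gives |Q| <= |mu||lambda|/|nu|: on a closed disk |z| <= r the Lipschitz
   function |Q|^2 + eps |z|^2 attains its maximum; not in the interior (its Laplacian
   4|Q'|^2 + 4 eps is positive), and at a boundary maximum c the first-order conditions
   make conj(Q(c)) c Q'(c) real and >= -O(eps), whence |nu Q(c) - c Q'(c)| >= |nu||Q(c)|
   - O(eps).  Let eps -> 0, then r -> 1; finally w1 := (p - 1)/lambda1 is the witness. *)

From Pilot Require Import Defs.
From Stdlib Require Import Reals Lra Lia Psatz ClassicalEpsilon.
From Coquelicot Require Complex.
Open Scope R_scope.

(** * Complex arithmetic *)

Ltac cdestruct := repeat match goal with
  | z : Cx |- _ => let a := fresh "a" in let b := fresh "b" in destruct z as [a b]
  end.
Ltac ceq := cdestruct; unfold Cadd, Cmul, Csub, Copp, Cinv, Cdiv, RtoC, Cone, Cz0 in *;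
  simpl; apply injective_projections; simpl.

(* The operations of [Defs] coincide with Coquelicot's complex numbers, so its
   modulus lemmas apply verbatim. *)
Lemma Cmod_mul z w : Cmod (Cmul z w) = Cmod z * Cmod w.
Proof. exact (Complex.Cmod_mult z w). Qed.
Lemma Cmod_add z w : Cmod (Cadd z w) <= Cmod z + Cmod w.
Proof. exact (Complex.Cmod_triangle z w). Qed.
Lemma Cmod_ge0 z : 0 <= Cmod z.
Proof. exact (Complex.Cmod_ge_0 z). Qed.
Lemma Cmod_opp z : Cmod (Copp z) = Cmod z.
Proof. exact (Complex.Cmod_opp z). Qed.
Lemma Cmod_RtoC x : Cmod (RtoC x) = Rabs x.
Proof. exact (Complex.Cmod_R x). Qed.
Lemma Cmod_eq0 z : Cmod z = 0 -> z = Cz0.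
Proof. exact (Complex.Cmod_eq_0 z). Qed.
Lemma Cmod_inv z : z <> Cz0 -> Cmod (Cinv z) = / Cmod z.
Proof. exact (Complex.Cmod_inv z). Qed.
Lemma Cmod_z0 : Cmod Cz0 = 0.
Proof. exact Complex.Cmod_0. Qed.
Lemma Cmod_one : Cmod Cone = 1.
Proof. exact Complex.Cmod_1. Qed.

Lemma Cmod_pos z : z <> Cz0 -> 0 < Cmod z.
Proof.
  intro Hz. destruct (Cmod_ge0 z) as [H|H]; auto.
  exfalso; apply Hz, Cmod_eq0; auto.
Qed.

Definition N2 (z : Cx) : R := fst z ^ 2 + snd z ^ 2.

Lemma N2_Cmod z : N2 z = Cmod z ^ 2.
Proof. unfold N2, Cmod. rewrite pow2_sqrt; nra. Qed.

Lemma N2_ge0 z : 0 <= N2 z.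
Proof. unfold N2; nra. Qed.

Lemma N2_neq0 z : z <> Cz0 -> N2 z <> 0.
Proof.
  intros Hz E. apply Hz. destruct z as [x y]. unfold N2 in E; simpl in E.
  assert (x = 0) by nra. assert (y = 0) by nra. subst. reflexivity.
Qed.

Lemma Cmod_le_N2 z w : N2 z <= N2 w -> Cmod z <= Cmod w.
Proof. unfold N2, Cmod. intro H. apply sqrt_le_1; nra. Qed.

Lemma Cmod_fst z : Rabs (fst z) <= Cmod z.
Proof. rewrite <- sqrt_Rsqr_abs. unfold Cmod, Rsqr. apply sqrt_le_1; nra. Qed.
Lemma Cmod_snd z : Rabs (snd z) <= Cmod z.
Proof. rewrite <- sqrt_Rsqr_abs. unfold Cmod, Rsqr. apply sqrt_le_1; nra. Qed.

Lemma Cmod_le_abs z : Cmod z <= Rabs (fst z) + Rabs (snd z).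
Proof.
  pose proof (Rabs_pos (fst z)). pose proof (Rabs_pos (snd z)).
  unfold Cmod. rewrite <- (sqrt_pow2 (Rabs (fst z) + Rabs (snd z))) by lra.
  apply sqrt_le_1; [nra | nra |].
  rewrite <- (pow2_abs (fst z)) at 1. rewrite <- (pow2_abs (snd z)) at 1. nra.
Qed.

Lemma Cmod_pow z k : Cmod (Cpow z k) = Cmod z ^ k.
Proof. induction k as [|k IH]; simpl Cpow; [exact Cmod_one | rewrite Cmod_mul, IH; reflexivity]. Qed.

Lemma Cmod_sub_sym z w : Cmod (Csub z w) = Cmod (Csub w z).
Proof. replace (Csub z w) with (Copp (Csub w z)) by (ceq; ring). apply Cmod_opp. Qed.

Lemma Cmod_sub_le z w : Cmod (Csub z w) <= Cmod z + Cmod w.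
Proof. unfold Csub. rewrite <- (Cmod_opp w). apply Cmod_add. Qed.

Lemma Cmod_sub_ge z w : Cmod z - Cmod w <= Cmod (Csub z w).
Proof.
  replace z with (Cadd (Csub z w) w) at 1 by (ceq; ring).
  pose proof (Cmod_add (Csub z w) w). lra.
Qed.

Lemma Cdiv_sub z w h : h <> Cz0 -> Csub (Cdiv z h) w = Cmul (Csub z (Cmul h w)) (Cinv h).
Proof.
  intro Hh. pose proof (N2_neq0 h Hh) as H. destruct h as [x y]. unfold N2 in H; simpl in H.
  ceq; field; intro E; apply H; nra.
Qed.

Lemma Cmul_Cinv_cancel l z : l <> Cz0 -> Cmul l (Cmul (Cinv l) z) = z.
Proof.
  intro Hl. pose proof (N2_neq0 l Hl) as H. destruct l as [x y]. unfold N2 in H; simpl in H.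
  ceq; field; intro E; apply H; nra.
Qed.

Lemma Cpow_add z k m : Cpow z (k + m) = Cmul (Cpow z k) (Cpow z m).
Proof.
  induction k as [|k IH]; simpl; [ceq; ring|].
  rewrite IH. generalize (Cpow z k) (Cpow z m). intros. ceq; ring.
Qed.

Lemma Cpow_z0 m : Cpow Cz0 (S m) = Cz0.
Proof. simpl. ceq; ring. Qed.

(** * Limits of complex sequences *)

Definition Ccv (u : nat -> Cx) (l : Cx) : Prop :=
  Un_cv (fun N => fst (u N)) (fst l) /\ Un_cv (fun N => snd (u N)) (snd l).

Lemma CV_const c : Un_cv (fun _ => c) c.
Proof. intros e He. exists 0%nat. intros. unfold Rdist. rewrite Rminus_diag, Rabs_R0; lra. Qed.

Lemma Ccv_unique u l1 l2 : Ccv u l1 -> Ccv u l2 -> l1 = l2.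
Proof. intros [a b] [c d]. apply injective_projections; eapply UL_sequence; eauto. Qed.

Lemma Ccv_const c : Ccv (fun _ => c) c.
Proof. split; apply CV_const. Qed.

Lemma Ccv_add u v l m : Ccv u l -> Ccv v m -> Ccv (fun N => Cadd (u N) (v N)) (Cadd l m).
Proof. intros [a b] [c d]. split; simpl; apply CV_plus; auto. Qed.

Lemma Ccv_sub u v l m : Ccv u l -> Ccv v m -> Ccv (fun N => Csub (u N) (v N)) (Csub l m).
Proof. intros [a b] [c d]. split; simpl; apply CV_plus; auto; apply CV_opp; auto. Qed.

Lemma Ccv_mulc c u l : Ccv u l -> Ccv (fun N => Cmul c (u N)) (Cmul c l).
Proof.
  intros [a b]. unfold Cmul. split; simpl.
  - apply CV_minus; apply CV_mult; auto; apply CV_const.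
  - apply CV_plus; apply CV_mult; auto; apply CV_const.
Qed.

Lemma Un_cv_eventually (u v : nat -> R) l N0 :
  (forall N, (N >= N0)%nat -> u N = v N) -> Un_cv u l -> Un_cv v l.
Proof.
  intros H Hu e He. destruct (Hu e He) as [N HN]. exists (max N N0). intros k Hk.
  rewrite <- H by lia. apply HN; lia.
Qed.

Lemma Ccv_eventually u v l N0 :
  (forall N, (N >= N0)%nat -> u N = v N) -> Ccv u l -> Ccv v l.
Proof.
  intros H [a b]. split.
  - apply (Un_cv_eventually (fun N => fst (u N)) _ _ N0); auto. intros N HN; rewrite H; auto.
  - apply (Un_cv_eventually (fun N => snd (u N)) _ _ N0); auto. intros N HN; rewrite H; auto.
Qed.

Lemma Ccv_shift u l m : Ccv u l -> Ccv (fun N => u (N + m)%nat) l.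
Proof. intros [a b]; split; apply (CV_shift' (fun N => _ (u N))); auto. Qed.

Lemma Ccv_S u l : Ccv u l -> Ccv (fun N => u (S N)) l.
Proof.
  intro H. apply (Ccv_eventually (fun N => u (N + 1)%nat)) with 0%nat.
  - intros; f_equal; lia.
  - apply Ccv_shift; auto.
Qed.

Lemma Ccv_bound u l B : (forall N, Cmod (u N) <= B) -> Ccv u l -> Cmod l <= B.
Proof.
  intros H [a b].
  assert (HB : 0 <= B) by (specialize (H 0%nat); pose proof (Cmod_ge0 (u 0%nat)); lra).
  assert (H1 : forall N, N2 (u N) <= B ^ 2).
  { intro N. rewrite N2_Cmod. specialize (H N). pose proof (Cmod_ge0 (u N)). nra. }
  assert (H2 : Un_cv (fun N => N2 (u N)) (N2 l)).
  { unfold N2. simpl. apply CV_plus; repeat apply CV_mult; auto; apply CV_const. }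
  pose proof (@Rle_cv_lim _ (fun _ => B ^ 2) _ _ H1 H2 (CV_const _)) as Hl.
  rewrite <- (sqrt_pow2 B HB). unfold Cmod. apply sqrt_le_1; auto. apply N2_ge0. apply pow2_ge_0.
Qed.

(** * Power series of radius at least 1 *)

(* [rad1 b]: the coefficients b satisfy |b k| rho^k = O(1) for every rho < 1, i.e. the
   power series sum b_k z^k has radius of convergence at least 1. *)
Definition rad1 (b : nat -> Cx) : Prop :=
  forall rho, 0 <= rho < 1 -> exists C, forall k, Cmod (b k) * rho ^ k <= C.

Definition psum (b : nat -> Cx) (z : Cx) : nat -> Cx := Csum (fun k => Cmul (b k) (Cpow z k)).
Definition SF (b : nat -> Cx) (z : Cx) : Cx :=
  epsilon (inhabits Cz0) (fun l => Cseries_cv (fun k => Cmul (b k) (Cpow z k)) l).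
Definition der (b : nat -> Cx) (k : nat) : Cx := Cmul (RtoC (INR (S k))) (b (S k)).

Lemma Csum_fst f N : fst (Csum f N) = sum_f_R0 (fun k => fst (f k)) N.
Proof. induction N; simpl; auto. rewrite IHN; auto. Qed.
Lemma Csum_snd f N : snd (Csum f N) = sum_f_R0 (fun k => snd (f k)) N.
Proof. induction N; simpl; auto. rewrite IHN; auto. Qed.

Lemma Csum_abs f N : Cmod (Csum f N) <= sum_f_R0 (fun k => Cmod (f k)) N.
Proof. induction N; simpl. lra. eapply Rle_trans. apply Cmod_add. lra. Qed.

Lemma geo_sum_le C q N : 0 <= C -> 0 <= q < 1 -> sum_f_R0 (fun k => C * q ^ k) N <= C / (1 - q).
Proof.
  intros HC Hq.
  replace (sum_f_R0 (fun k => C * q ^ k) N) with (C * sum_f_R0 (fun k => q ^ k) N)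
    by (rewrite scal_sum; apply sum_eq; intros; ring).
  rewrite tech3 by lra.
  assert (0 <= q ^ S N) by (apply pow_le; lra).
  assert (0 < / (1 - q)) by (apply Rinv_0_lt_compat; lra).
  unfold Rdiv. apply Rmult_le_compat_l; auto. nra.
Qed.

Lemma pow_le_one x k : 0 <= x <= 1 -> x ^ k <= 1.
Proof. intro Hx. rewrite <- (pow1 k). apply pow_incr; lra. Qed.

(* (k+1) x^k <= 1 + x + ... + x^k <= 1/(1-x). *)
Lemma poly_geo x k : 0 <= x < 1 -> (INR k + 1) * x ^ k <= / (1 - x).
Proof.
  intro Hx.
  assert (Hsum : (INR k + 1) * x ^ k <= sum_f_R0 (fun j => 1 * x ^ j) k).
  { rewrite <- S_INR, Rmult_comm, <- sum_cte. apply sum_Rle. intros j Hj.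
    rewrite Rmult_1_l. replace k with (j + (k - j))%nat by lia. rewrite pow_add.
    pose proof (pow_le x j ltac:(lra)).
    assert (x ^ (k - j) <= 1) by (apply pow_le_one; lra).
    pose proof (pow_le x (k - j) ltac:(lra)). nra. }
  pose proof (geo_sum_le 1 x k ltac:(lra) Hx). unfold Rdiv in *. lra.
Qed.

Lemma series_geom_nonneg (u : nat -> R) C q : 0 <= q < 1 ->
  (forall k, 0 <= u k <= C * q ^ k) -> exists l, Un_cv (fun N => sum_f_R0 u N) l.
Proof.
  intros Hq H.
  assert (G : {l | Un_cv (fun N => sum_f_R0 (fun k => C * q ^ k) N) l}).
  { exists (C * / (1 - q)).
    assert (P := GP_infinite q ltac:(rewrite Rabs_right; lra)).
    unfold Pser, infinite_sum in P.
    apply (Un_cv_eventually (fun N => C * sum_f_R0 (fun k => 1 * q ^ k) N)) with 0%nat.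
    - intros N _. rewrite scal_sum. apply sum_eq. intros; ring.
    - apply CV_mult; [apply CV_const | exact P]. }
  destruct (Rseries_CV_comp u _ H G) as [l Hl]. eauto.
Qed.

Lemma series_geom_dominated (u : nat -> R) C q : 0 <= q < 1 ->
  (forall k, Rabs (u k) <= C * q ^ k) -> exists l, Un_cv (fun N => sum_f_R0 u N) l.
Proof.
  intros Hq H.
  destruct (series_geom_nonneg (fun k => (Rabs (u k) + u k) / 2) C q Hq) as [l1 H1].
  { intro k. specialize (H k). split; unfold Rabs in *; destruct Rcase_abs; lra. }
  destruct (series_geom_nonneg (fun k => (Rabs (u k) - u k) / 2) C q Hq) as [l2 H2].
  { intro k. specialize (H k). split; unfold Rabs in *; destruct Rcase_abs; lra. }
  exists (l1 - l2).
  apply (Un_cv_eventually (fun N => sum_f_R0 (fun k => (Rabs (u k) + u k) / 2) N -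
     sum_f_R0 (fun k => (Rabs (u k) - u k) / 2) N)) with 0%nat.
  - intros N _. rewrite <- minus_sum. apply sum_eq. intros; field.
  - apply CV_minus; auto.
Qed.

Lemma rad1_geo b r : rad1 b -> 0 <= r < 1 ->
  exists C q, 0 <= C /\ 0 <= q < 1 /\ forall k, Cmod (b k) * r ^ k <= C * q ^ k.
Proof.
  intros Hb Hr. set (rho := (1 + r) / 2).
  destruct (Hb rho ltac:(unfold rho; lra)) as [C HC].
  assert (Hrho : 0 < rho) by (unfold rho; lra).
  assert (HC0 : 0 <= C) by (specialize (HC 0%nat); pose proof (Cmod_ge0 (b 0%nat)); simpl in HC; lra).
  exists C, (r / rho). repeat split; auto.
  - apply Rmult_le_pos; [lra | apply Rlt_le, Rinv_0_lt_compat; lra].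
  - apply Rmult_lt_reg_r with rho; auto. unfold Rdiv. rewrite Rmult_assoc, Rinv_l; unfold rho in *; lra.
  - intro k. specialize (HC k). unfold Rdiv. rewrite Rpow_mult_distr, pow_inv.
    assert (0 < rho ^ k) by (apply pow_lt; auto).
    assert (0 <= r ^ k * / rho ^ k) by (apply Rmult_le_pos; [apply pow_le; lra | apply Rlt_le, Rinv_0_lt_compat; auto]).
    replace (Cmod (b k) * r ^ k) with ((Cmod (b k) * rho ^ k) * (r ^ k * / rho ^ k)) by (field; lra).
    apply Rmult_le_compat_r; auto.
Qed.

Lemma rad1_le b b' : (forall k, Cmod (b' k) <= Cmod (b k)) -> rad1 b -> rad1 b'.
Proof.
  intros H Hb rho Hr. destruct (Hb rho Hr) as [C HC]. exists C. intro k.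
  eapply Rle_trans; [| apply HC]. apply Rmult_le_compat_r; auto. apply pow_le; lra.
Qed.

Lemma rad1_lin b : rad1 b -> rad1 (fun k => Cmul (RtoC (INR k + 1)) (b k)).
Proof.
  intros Hb rho Hr. destruct (rad1_geo b rho Hb Hr) as [C [q [HC [Hq Hk]]]].
  exists (C * / (1 - q)). intro k. pose proof (pos_INR k).
  rewrite Cmod_mul, Cmod_RtoC, Rabs_right by lra.
  pose proof (poly_geo q k Hq). pose proof (Hk k). pose proof (pow_le q k ltac:(lra)).
  replace (((INR k + 1) * Cmod (b k)) * rho ^ k) with ((INR k + 1) * (Cmod (b k) * rho ^ k)) by ring.
  apply Rle_trans with ((INR k + 1) * (C * q ^ k)). apply Rmult_le_compat_l; lra.
  replace ((INR k + 1) * (C * q ^ k)) with (C * ((INR k + 1) * q ^ k)) by ring.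
  apply Rmult_le_compat_l; auto.
Qed.

Lemma rad1_shift b n : rad1 b -> rad1 (fun k => b (k + n)%nat).
Proof.
  intros Hb rho Hr. set (r1 := (1 + rho) / 2).
  destruct (Hb r1 ltac:(unfold r1; lra)) as [C HC].
  assert (Hr1 : 0 < r1) by (unfold r1; lra).
  assert (0 < r1 ^ n) by (apply pow_lt; auto).
  exists (C / r1 ^ n). intro k.
  apply Rle_trans with (Cmod (b (k + n)%nat) * r1 ^ k).
  { apply Rmult_le_compat_l. apply Cmod_ge0. apply pow_incr; unfold r1; lra. }
  specialize (HC (k + n)%nat). rewrite pow_add in HC.
  apply Rmult_le_reg_r with (r1 ^ n); auto.
  unfold Rdiv. rewrite (Rmult_assoc C), Rinv_l by lra. nra.
Qed.

Lemma rad1_der b : rad1 b -> rad1 (der b).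
Proof.
  intro Hb. apply (rad1_le (fun k => Cmul (RtoC (INR k + 1)) (b (k + 1)%nat))).
  - intro k. unfold der. rewrite S_INR, Nat.add_1_r. apply Rle_refl.
  - apply rad1_lin, rad1_shift, Hb.
Qed.

Lemma SF_spec b z : rad1 b -> Cmod z < 1 -> Cseries_cv (fun k => Cmul (b k) (Cpow z k)) (SF b z).
Proof.
  intros Hb Hz. unfold SF.
  apply (epsilon_spec (inhabits Cz0) (fun l => Cseries_cv (fun k => Cmul (b k) (Cpow z k)) l)).
  destruct (rad1_geo b (Cmod z) Hb ltac:(split; [apply Cmod_ge0 | auto])) as [C [q [HC [Hq Hk]]]].
  destruct (series_geom_dominated (fun k => fst (Cmul (b k) (Cpow z k))) C q Hq) as [l1 H1].
  { intro k. eapply Rle_trans. apply Cmod_fst. rewrite Cmod_mul, Cmod_pow. auto. }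
  destruct (series_geom_dominated (fun k => snd (Cmul (b k) (Cpow z k))) C q Hq) as [l2 H2].
  { intro k. eapply Rle_trans. apply Cmod_snd. rewrite Cmod_mul, Cmod_pow. auto. }
  exists (l1, l2). split; simpl.
  - apply (Un_cv_eventually _ _ _ 0%nat) with (2 := H1). intros; rewrite Csum_fst; reflexivity.
  - apply (Un_cv_eventually _ _ _ 0%nat) with (2 := H2). intros; rewrite Csum_snd; reflexivity.
Qed.

Lemma SF_bound b r : rad1 b -> 0 <= r < 1 -> exists B, forall z, Cmod z <= r -> Cmod (SF b z) <= B.
Proof.
  intros Hb Hr. destruct (rad1_geo b r Hb Hr) as [C [q [HC [Hq Hk]]]].
  exists (C / (1 - q)). intros z Hz.
  apply (Ccv_bound (psum b z)); [| apply SF_spec; auto; lra].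
  intro N. eapply Rle_trans. apply Csum_abs. eapply Rle_trans; [| apply (geo_sum_le C q N); auto].
  apply sum_Rle. intros k _. rewrite Cmod_mul, Cmod_pow. eapply Rle_trans; [| apply Hk].
  apply Rmult_le_compat_l. apply Cmod_ge0. apply pow_incr. split; auto. apply Cmod_ge0.
Qed.

Lemma term_bound_of_sums (u : nat -> R) C :
  (forall N, Rabs (sum_f_R0 u N) <= C) -> forall k, Rabs (u k) <= 2 * C.
Proof.
  intros H k. assert (0 <= C) by (pose proof (H 0%nat); pose proof (Rabs_pos (sum_f_R0 u 0)); lra).
  destruct k as [|k].
  - specialize (H 0%nat). simpl in H. lra.
  - replace (u (S k)) with (sum_f_R0 u (S k) - sum_f_R0 u k) by (simpl; ring).
    pose proof (Rabs_triang (sum_f_R0 u (S k)) (- sum_f_R0 u k)).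
    rewrite Rabs_Ropp in H1. pose proof (H (S k)). pose proof (H k). unfold Rminus. lra.
Qed.

Lemma rad1_of_cv a p :
  (forall z, inU z -> Cseries_cv (fun k => Cmul (a k) (Cpow z k)) (p z)) -> rad1 a.
Proof.
  intros H rho Hr.
  assert (Hz : inU (RtoC rho)) by (unfold inU; rewrite Cmod_RtoC, Rabs_right; lra).
  set (f := fun k => Cmul (a k) (Cpow (RtoC rho) k)).
  destruct (H _ Hz) as [H1 H2].
  destruct (maj_by_pos _ (exist _ _ H1)) as [C1 [_ HC1]].
  destruct (maj_by_pos _ (exist _ _ H2)) as [C2 [_ HC2]].
  exists (2 * C1 + 2 * C2). intro k.
  replace (Cmod (a k) * rho ^ k) with (Cmod (f k))
    by (unfold f; rewrite Cmod_mul, Cmod_pow, Cmod_RtoC, Rabs_right; lra).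
  eapply Rle_trans. apply Cmod_le_abs.
  pose proof (term_bound_of_sums (fun k => fst (f k)) C1) as B1.
  pose proof (term_bound_of_sums (fun k => snd (f k)) C2) as B2.
  assert (E1 : forall N, Rabs (sum_f_R0 (fun k => fst (f k)) N) <= C1)
    by (intro N; rewrite <- Csum_fst; apply HC1).
  assert (E2 : forall N, Rabs (sum_f_R0 (fun k => snd (f k)) N) <= C2)
    by (intro N; rewrite <- Csum_snd; apply HC2).
  specialize (B1 E1 k). specialize (B2 E2 k). lra.
Qed.

(** * The second-order Taylor bound for power series *)

Definition TaylorBound (F F1 : Cx -> Cx) (r C : R) : Prop :=
  forall z h, Cmod z + Cmod h <= r ->
    Cmod (Csub (Csub (F (Cadd z h)) (F z)) (Cmul h (F1 z))) <= C * Cmod h ^ 2.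

(* dpow z k = k z^(k-1) (the derivative of z^k), and the remainder of the first-order
   expansion of (z + h)^k. *)
Fixpoint dpow (z : Cx) (k : nat) : Cx :=
  match k with O => Cz0 | S k' => Cadd (Cpow z k') (Cmul z (dpow z k')) end.
Definition pow_rem (z h : Cx) (k : nat) : Cx :=
  Csub (Csub (Cpow (Cadd z h) k) (Cpow z k)) (Cmul (dpow z k) h).

Lemma dpow_S z k : dpow z (S k) = Cmul (RtoC (INR (S k))) (Cpow z k).
Proof.
  induction k as [|k IH]; [simpl; ceq; ring|].
  change (dpow z (S (S k))) with (Cadd (Cpow z (S k)) (Cmul z (dpow z (S k)))).
  rewrite IH. change (Cpow z (S k)) with (Cmul z (Cpow z k)).
  rewrite (S_INR (S k)). generalize (Cpow z k) (INR (S k)). intros. ceq; ring.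
Qed.

Lemma pow_rem_S z h k :
  pow_rem z h (S k) = Cadd (Cmul (Cadd z h) (pow_rem z h k)) (Cmul (dpow z k) (Cmul h h)).
Proof.
  unfold pow_rem. simpl Cpow. simpl dpow.
  generalize (Cpow (Cadd z h) k) (Cpow z k) (dpow z k). intros. ceq; ring.
Qed.

Lemma dpow_bound z k R : 0 < R -> Cmod z <= R -> Cmod (dpow z k) <= INR k * R ^ k / R.
Proof.
  intros HR Hz. induction k as [|k IH]; [simpl; rewrite Cmod_z0; lra|].
  simpl dpow. eapply Rle_trans. apply Cmod_add. rewrite Cmod_mul, Cmod_pow.
  assert (Cmod z ^ k <= R ^ k) by (apply pow_incr; split; auto; apply Cmod_ge0).
  assert (Cmod z * Cmod (dpow z k) <= R * (INR k * R ^ k / R))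
    by (apply Rmult_le_compat; auto; apply Cmod_ge0).
  rewrite S_INR. simpl pow.
  replace ((INR k + 1) * (R * R ^ k) / R) with (R ^ k + R * (INR k * R ^ k / R)) by (field; lra).
  lra.
Qed.

Lemma pow_rem_bound z h k R : 0 < R -> Cmod z + Cmod h <= R ->
  Cmod (pow_rem z h k) <= INR k * (INR k - 1) / 2 * R ^ k / (R * R) * Cmod h ^ 2.
Proof.
  intros HR Hzh. pose proof (Cmod_ge0 z). pose proof (Cmod_ge0 h).
  induction k as [|k IH].
  - unfold pow_rem. simpl. replace (Csub (Csub Cone Cone) (Cmul Cz0 h)) with Cz0 by (ceq; ring).
    rewrite Cmod_z0. lra.
  - rewrite pow_rem_S. eapply Rle_trans. apply Cmod_add. rewrite !Cmod_mul.
    assert (Cmod (Cadd z h) <= R) by (pose proof (Cmod_add z h); lra).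
    pose proof (dpow_bound z k R HR ltac:(lra)).
    assert (A1 : Cmod (Cadd z h) * Cmod (pow_rem z h k)
                 <= R * (INR k * (INR k - 1) / 2 * R ^ k / (R * R) * Cmod h ^ 2))
      by (apply Rmult_le_compat; auto; apply Cmod_ge0).
    assert (A2 : Cmod (dpow z k) * (Cmod h * Cmod h) <= INR k * R ^ k / R * (Cmod h * Cmod h))
      by (apply Rmult_le_compat_r; nra).
    rewrite S_INR. simpl pow in *.
    replace ((INR k + 1) * (INR k + 1 - 1) / 2 * (R * R ^ k) / (R * R) * (Cmod h * (Cmod h * 1)))
      with (R * (INR k * (INR k - 1) / 2 * R ^ k / (R * R) * (Cmod h * (Cmod h * 1))) +
            INR k * R ^ k / R * (Cmod h * Cmod h)) by (field; lra).
    lra.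
Qed.

Lemma sum_dpow b z N : Csum (fun k => Cmul (b k) (dpow z k)) (S N) = psum (der b) z N.
Proof.
  unfold psum. induction N as [|N IH].
  - simpl. unfold der. replace (INR 1) with 1 by (simpl; ring).
    generalize (b 1%nat) (b 0%nat). intros. ceq; ring.
  - change (Csum (fun k => Cmul (b k) (dpow z k)) (S (S N))) with
      (Cadd (Csum (fun k => Cmul (b k) (dpow z k)) (S N)) (Cmul (b (S (S N))) (dpow z (S (S N))))).
    rewrite IH, dpow_S. simpl Csum. unfold der.
    change (Cpow z (S N)) with (Cmul z (Cpow z N)).
    generalize (Csum (fun k => Cmul (Cmul (RtoC (INR (S k))) (b (S k))) (Cpow z k)) N)
      (b (S (S N))) (Cpow z N) (INR (S (S N))). intros. simpl Cpow. ceq; ring.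
Qed.

Lemma sum_pow_rem b z h N : Csum (fun k => Cmul (b k) (pow_rem z h k)) N =
  Csub (Csub (psum b (Cadd z h) N) (psum b z N)) (Cmul h (Csum (fun k => Cmul (b k) (dpow z k)) N)).
Proof.
  unfold psum, pow_rem. induction N as [|N IH]; simpl Csum.
  - generalize (b 0%nat) (Cpow (Cadd z h) 0) (Cpow z 0) (dpow z 0). intros. ceq; ring.
  - rewrite IH.
    generalize (b (S N)) (Cpow (Cadd z h) (S N)) (Cpow z (S N)) (dpow z (S N))
      (Csum (fun k => Cmul (b k) (Cpow (Cadd z h) k)) N)
      (Csum (fun k => Cmul (b k) (Cpow z k)) N)
      (Csum (fun k => Cmul (b k) (dpow z k)) N). intros. ceq; ring.
Qed.

Lemma SF_taylor b r : rad1 b -> 0 < r < 1 -> exists C, 0 <= C /\ TaylorBound (SF b) (SF (der b)) r C.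
Proof.
  intros Hb Hr.
  destruct (rad1_geo _ r (rad1_lin _ (rad1_lin _ Hb)) ltac:(lra)) as [C [q [HC [Hq Hk]]]].
  assert (0 < r * r) by nra.
  exists (C / (1 - q) / (r * r)). split.
  { apply Rmult_le_pos; [apply Rmult_le_pos; auto|]; apply Rlt_le, Rinv_0_lt_compat; lra. }
  intros z h Hzh. pose proof (Cmod_ge0 z). pose proof (Cmod_ge0 h).
  assert (Hz1 : Cmod z < 1) by lra.
  assert (Hzh1 : Cmod (Cadd z h) < 1) by (pose proof (Cmod_add z h); lra).
  assert (Hterm : forall k, Cmod (Cmul (b k) (pow_rem z h k)) <= C * q ^ k * (Cmod h ^ 2 / (r * r))).
  { intro k. rewrite Cmod_mul.
    pose proof (pow_rem_bound z h k r ltac:(lra) Hzh).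
    specialize (Hk k). rewrite !Cmod_mul, !Cmod_RtoC, !Rabs_right in Hk by (pose proof (pos_INR k); lra).
    pose proof (pos_INR k). pose proof (Cmod_ge0 (b k)). pose proof (pow_le r k ltac:(lra)).
    eapply Rle_trans. apply Rmult_le_compat_l. apply Cmod_ge0. eassumption.
    replace (Cmod (b k) * (INR k * (INR k - 1) / 2 * r ^ k / (r * r) * Cmod h ^ 2)) with
      ((Cmod (b k) * (INR k * (INR k - 1) / 2) * r ^ k) * (Cmod h ^ 2 / (r * r))) by (field; lra).
    apply Rmult_le_compat_r. apply Rmult_le_pos. apply pow_le; lra. apply Rlt_le, Rinv_0_lt_compat; lra.
    eapply Rle_trans; [| exact Hk]. apply Rmult_le_compat_r; auto. nra. }
  apply (Ccv_bound (fun N => Csum (fun k => Cmul (b k) (pow_rem z h k)) (S N))).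
  - intro N. eapply Rle_trans. apply Csum_abs.
    eapply Rle_trans. apply sum_Rle. intros k _. apply Hterm.
    rewrite <- scal_sum.
    replace (C / (1 - q) / (r * r) * Cmod h ^ 2) with (Cmod h ^ 2 / (r * r) * (C / (1 - q))) by (field; lra).
    apply Rmult_le_compat_l. apply Rmult_le_pos. apply pow_le; lra. apply Rlt_le, Rinv_0_lt_compat; lra.
    apply geo_sum_le; auto.
  - apply (Ccv_eventually (fun N => Csub (Csub (psum b (Cadd z h) (S N)) (psum b z (S N)))
                                         (Cmul h (psum (der b) z N)))) with 0%nat.
    { intros N _. rewrite sum_pow_rem, sum_dpow. reflexivity. }
    apply Ccv_sub; [apply Ccv_sub|].
    + apply (Ccv_S (psum b (Cadd z h))). apply SF_spec; auto.
    + apply (Ccv_S (psum b z)). apply SF_spec; auto.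
    + apply Ccv_mulc. apply SF_spec; auto. apply rad1_der; auto.
Qed.

(** * Derivatives along real lines *)

Definition line (c v : Cx) (t : R) : Cx := Cadd c (Cmul (RtoC t) v).
Definition dot (z w : Cx) : R := fst z * fst w + snd z * snd w.

Lemma line0 c v : line c v 0 = c.
Proof. unfold line. ceq; ring. Qed.

Lemma Cmod_line c v t : Cmod (line c v t) <= Cmod c + Rabs t * Cmod v.
Proof. unfold line. eapply Rle_trans. apply Cmod_add. rewrite Cmod_mul, Cmod_RtoC. lra. Qed.

Definition deriv_along (G : R -> Cx) (t : R) (l : Cx) : Prop :=
  derivable_pt_lim (fun s => fst (G s)) t (fst l) /\
  derivable_pt_lim (fun s => snd (G s)) t (snd l).

Lemma derivable_pt_lim_ext_val (f g : R -> R) x l m :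
  (forall s, f s = g s) -> l = m -> derivable_pt_lim f x l -> derivable_pt_lim g x m.
Proof. intros E <-. apply derivable_pt_lim_ext; auto. Qed.

Lemma derivable_pt_lim_affine a b t : derivable_pt_lim (fun s => a + b * s) t b.
Proof.
  eapply derivable_pt_lim_ext_val; [| | apply derivable_pt_lim_plus;
    [apply (derivable_pt_lim_const a) | apply (derivable_pt_lim_scal id b), derivable_pt_lim_id]].
  - intro s. reflexivity.
  - ring.
Qed.

Lemma deriv_along_line c v t : deriv_along (line c v) t v.
Proof.
  split.
  - eapply derivable_pt_lim_ext; [| apply (derivable_pt_lim_affine (fst c) (fst v))].
    intro s. unfold line. simpl. ring.
  - eapply derivable_pt_lim_ext; [| apply (derivable_pt_lim_affine (snd c) (snd v))].
    intro s. unfold line. simpl. ring.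
Qed.

Lemma deriv_along_const v t : deriv_along (fun _ => v) t Cz0.
Proof. split; apply derivable_pt_lim_const. Qed.

Lemma deriv_along_mulc G t l v : deriv_along G t l -> deriv_along (fun s => Cmul (G s) v) t (Cmul l v).
Proof.
  intros [D1 D2].
  pose proof (derivable_pt_lim_const (fst v) t) as V1.
  pose proof (derivable_pt_lim_const (snd v) t) as V2.
  split; simpl.
  - eapply derivable_pt_lim_ext_val; [| | apply derivable_pt_lim_minus;
      apply derivable_pt_lim_mult; [exact D1 | exact V1 | exact D2 | exact V2]].
    + intro; unfold minus_fct, mult_fct, fct_cte; ring.
    + unfold fct_cte; ring.
  - eapply derivable_pt_lim_ext_val; [| | apply derivable_pt_lim_plus;
      apply derivable_pt_lim_mult; [exact D1 | exact V2 | exact D2 | exact V1]].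
    + intro; unfold plus_fct, mult_fct, fct_cte; ring.
    + unfold fct_cte; ring.
Qed.

Lemma deriv_dot G H t l m : deriv_along G t l -> deriv_along H t m ->
  derivable_pt_lim (fun s => dot (G s) (H s)) t (dot l (H t) + dot (G t) m).
Proof.
  intros [G1 G2] [H1 H2]. unfold dot.
  eapply derivable_pt_lim_ext_val; [| | apply derivable_pt_lim_plus;
    apply derivable_pt_lim_mult; [exact G1 | exact H1 | exact G2 | exact H2]].
  - intro; unfold plus_fct, mult_fct; ring.
  - cbv beta. ring.
Qed.

Lemma taylor_line_quotient F F1 r C c v t s : TaylorBound F F1 r C -> s <> 0 ->
  Cmod (line c v t) + Rabs s * Cmod v <= r ->
  Cmod (Csub (Cmul (RtoC (/ s)) (Csub (F (line c v (t + s))) (F (line c v t))))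
             (Cmul (F1 (line c v t)) v)) <= C * Rabs s * Cmod v ^ 2.
Proof.
  intros HF Hs Hin. set (w := line c v t).
  assert (Habs : 0 < Rabs s) by (apply Rabs_pos_lt; auto).
  replace (line c v (t + s)) with (Cadd w (Cmul (RtoC s) v)) by (unfold w, line; ceq; ring).
  assert (Hsv : Cmod (Cmul (RtoC s) v) = Rabs s * Cmod v) by (rewrite Cmod_mul, Cmod_RtoC; auto).
  specialize (HF w (Cmul (RtoC s) v) ltac:(rewrite Hsv; exact Hin)).
  rewrite Hsv in HF.
  replace (Csub (Cmul (RtoC (/ s)) (Csub (F (Cadd w (Cmul (RtoC s) v))) (F w))) (Cmul (F1 w) v))
    with (Cmul (RtoC (/ s)) (Csub (Csub (F (Cadd w (Cmul (RtoC s) v))) (F w)) (Cmul (Cmul (RtoC s) v) (F1 w))))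
    by (generalize (F (Cadd w (Cmul (RtoC s) v))) (F w) (F1 w); intros; ceq; field; auto).
  rewrite Cmod_mul, Cmod_RtoC, Rabs_inv.
  apply Rmult_le_reg_l with (Rabs s); auto. rewrite <- Rmult_assoc, Rinv_r, Rmult_1_l by lra.
  eapply Rle_trans; [exact HF|]. right. ring.
Qed.

Lemma taylor_line_deriv F F1 r C c v t : TaylorBound F F1 r C -> 0 <= C -> Cmod (line c v t) < r ->
  deriv_along (fun s => F (line c v s)) t (Cmul (F1 (line c v t)) v).
Proof.
  intros HF HC Hw.
  assert (Hquot : forall eps, 0 < eps -> exists delta : posreal, forall s, s <> 0 -> Rabs s < delta ->
    Cmod (Csub (Cmul (RtoC (/ s)) (Csub (F (line c v (t + s))) (F (line c v t))))
               (Cmul (F1 (line c v t)) v)) < eps).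
  { intros eps He. pose proof (Cmod_ge0 v). pose proof (pow_le (Cmod v) 2 H).
    set (d1 := (r - Cmod (line c v t)) / (Cmod v + 1)).
    set (d2 := eps / (C * Cmod v ^ 2 + 1)).
    assert (Hd : 0 < Rmin d1 d2) by (apply Rmin_pos; apply Rdiv_lt_0_compat; nra).
    exists (mkposreal _ Hd). intros s Hs Hsd. change (Rabs s < Rmin d1 d2) in Hsd.
    pose proof (Rmin_l d1 d2). pose proof (Rmin_r d1 d2). pose proof (Rabs_pos s).
    assert (Hs1 : Rabs s * (Cmod v + 1) <= r - Cmod (line c v t)).
    { replace (r - Cmod (line c v t)) with (d1 * (Cmod v + 1)) by (unfold d1; field; lra).
      apply Rmult_le_compat_r; lra. }
    assert (Hs2 : Rabs s * (C * Cmod v ^ 2 + 1) < eps).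
    { replace eps with (d2 * (C * Cmod v ^ 2 + 1)) by (unfold d2; field; nra).
      apply Rmult_lt_compat_r; nra. }
    eapply Rle_lt_trans. apply (taylor_line_quotient F F1 r C); auto; nra. nra. }
  split; intros eps He; destruct (Hquot eps He) as [d Hd]; exists d; intros s Hs Hsd;
    eapply Rle_lt_trans; try apply (Hd s Hs Hsd).
  - eapply Rle_trans; [| apply Cmod_fst]. right. f_equal. unfold Csub, Cadd, Copp, Cmul, RtoC. simpl. unfold Rdiv. ring.
  - eapply Rle_trans; [| apply Cmod_snd]. right. f_equal. unfold Csub, Cadd, Copp, Cmul, RtoC. simpl. unfold Rdiv. ring.
Qed.

(* The perturbed squared modulus |Q z|^2 + eps |z|^2 whose maximum is studied below,
   and its first and second derivatives along the line c + t v. *)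
Definition ueps (Q : Cx -> Cx) (eps : R) (z : Cx) : R := N2 (Q z) + eps * N2 z.

Definition ueps_d1 (Q Q1 : Cx -> Cx) (eps : R) (c v : Cx) (t : R) : R :=
  2 * dot (Q (line c v t)) (Cmul (Q1 (line c v t)) v) + eps * (2 * dot (line c v t) v).

Definition ueps_d2 (Q Q1 Q2 : Cx -> Cx) (eps : R) (c v : Cx) (t : R) : R :=
  2 * (N2 (Cmul (Q1 (line c v t)) v) + dot (Q (line c v t)) (Cmul (Cmul (Q2 (line c v t)) v) v))
  + eps * (2 * N2 v).

Lemma ueps_line_deriv Q Q1 r C eps c v t : TaylorBound Q Q1 r C -> 0 <= C -> Cmod (line c v t) < r ->
  derivable_pt_lim (fun s => ueps Q eps (line c v s)) t (ueps_d1 Q Q1 eps c v t).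
Proof.
  intros HQ HC Hw.
  pose proof (taylor_line_deriv Q Q1 r C c v t HQ HC Hw) as DQ.
  pose proof (deriv_along_line c v t) as DL.
  eapply derivable_pt_lim_ext_val; [| | apply derivable_pt_lim_plus;
    [exact (deriv_dot _ _ _ _ _ DQ DQ) | apply derivable_pt_lim_scal with (a := eps); exact (deriv_dot _ _ _ _ _ DL DL)]].
  - intro s. unfold ueps, N2, dot, plus_fct, mult_real_fct. cbv beta. ring.
  - unfold ueps_d1, dot. cbv beta. ring.
Qed.

Lemma ueps_line_deriv2 Q Q1 Q2 r C1 C2 eps c v t :
  TaylorBound Q Q1 r C1 -> 0 <= C1 -> TaylorBound Q1 Q2 r C2 -> 0 <= C2 -> Cmod (line c v t) < r ->
  derivable_pt_lim (ueps_d1 Q Q1 eps c v) t (ueps_d2 Q Q1 Q2 eps c v t).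
Proof.
  intros HQ HC1 HQ1 HC2 Hw.
  pose proof (taylor_line_deriv Q Q1 r C1 c v t HQ HC1 Hw) as DQ.
  pose proof (deriv_along_mulc _ _ _ v (taylor_line_deriv Q1 Q2 r C2 c v t HQ1 HC2 Hw)) as DQ1.
  pose proof (deriv_along_line c v t) as DL.
  eapply derivable_pt_lim_ext_val; [| | apply derivable_pt_lim_plus;
    [apply derivable_pt_lim_scal with (a := 2); exact (deriv_dot _ _ _ _ _ DQ DQ1)
    | apply derivable_pt_lim_scal with (a := eps); apply derivable_pt_lim_scal with (a := 2); exact (deriv_dot _ _ _ _ _ DL (deriv_along_const v t))]].
  - intro s. unfold ueps_d1, plus_fct, mult_real_fct. cbv beta. ring.
  - unfold ueps_d2, N2, dot. cbv beta. simpl. ring.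
Qed.

(** * One-variable extremum tests *)

Lemma deriv_nonpos_at_right_max (f : R -> R) L d : 0 < d -> derivable_pt_lim f 0 L ->
  (forall t, 0 < t < d -> f t <= f 0) -> L <= 0.
Proof.
  intros Hd H Hm. apply Rnot_lt_le. intro HL.
  destruct (H (L / 2) ltac:(lra)) as [e He].
  pose proof (cond_pos e) as He0. set (s := Rmin d e / 2).
  assert (Hs : 0 < s) by (unfold s; pose proof (Rmin_pos d e Hd He0); lra).
  assert (s < d) by (unfold s; pose proof (Rmin_l d e); lra).
  assert (s < e) by (unfold s; pose proof (Rmin_r d e); lra).
  specialize (He s ltac:(lra) ltac:(rewrite Rabs_right; lra)).
  specialize (Hm s ltac:(lra)). rewrite Rplus_0_l in He.
  assert ((f s - f 0) / s <= 0) by (unfold Rdiv; assert (0 < / s) by (apply Rinv_0_lt_compat; lra); nra).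
  apply Rabs_def2 in He. lra.
Qed.

Lemma no_max_of_pos_second_deriv (f f' : R -> R) D dl : 0 < dl ->
  (forall t, -dl < t < dl -> derivable_pt_lim f t (f' t)) -> derivable_pt_lim f' 0 D -> 0 < D ->
  (forall t, -dl < t < dl -> f t <= f 0) -> False.
Proof.
  intros Hdl Hf Hd HD Hm.
  assert (d0 : f' 0 = 0).
  { exact (deriv_maximum f (- dl) dl 0 (exist _ (f' 0) (Hf 0 ltac:(lra))) ltac:(lra) ltac:(lra)
             (fun x H1 H2 => Hm x (conj H1 H2))). }
  destruct (Hd (D / 2) ltac:(lra)) as [e He]. pose proof (cond_pos e) as He0.
  assert (Hpos : forall s, 0 < s < e -> 0 < f' s).
  { intros s Hs. specialize (He s ltac:(lra) ltac:(rewrite Rabs_right; lra)).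
    rewrite Rplus_0_l, d0, Rminus_0_r in He. apply Rabs_def2 in He.
    apply Rnot_le_lt. intro Hle.
    assert (f' s / s <= 0) by (unfold Rdiv; assert (0 < / s) by (apply Rinv_0_lt_compat; lra); nra).
    lra. }
  set (s := Rmin dl e / 2).
  assert (Hs : 0 < s) by (unfold s; pose proof (Rmin_pos dl e Hdl He0); lra).
  assert (s < dl) by (unfold s; pose proof (Rmin_l dl e); lra).
  assert (s < e) by (unfold s; pose proof (Rmin_r dl e); lra).
  destruct (MVT_cor2 f f' 0 s Hs) as [x [Ex Hx]]; [intros x Hx; apply Hf; lra|].
  specialize (Hpos x ltac:(lra)). specialize (Hm s ltac:(lra)). nra.
Qed.

(** * Maxima of Lipschitz functions on closed disks *)

Lemma lipschitz_continuity_pt (f : R -> R) y0 L : 0 <= L ->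
  (forall y, Rabs (f y - f y0) <= L * Rabs (y - y0)) -> continuity_pt f y0.
Proof.
  intros HL H eps He. exists (eps / (L + 1)). split; [apply Rdiv_lt_0_compat; lra|].
  intros x [_ Hx]. simpl in *. unfold Rdist in *. eapply Rle_lt_trans; [apply H|].
  apply Rle_lt_trans with ((L + 1) * Rabs (x - y0)); [pose proof (Rabs_pos (x - y0)); nra|].
  replace eps with ((L + 1) * (eps / (L + 1))) by (field; lra).
  apply Rmult_lt_compat_l; lra.
Qed.

Lemma lipschitz_of_deriv_bound (f f' : R -> R) :
  (forall x, derivable_pt_lim f x (f' x)) -> (forall x, Rabs (f' x) <= 1) ->
  forall x y, Rabs (f x - f y) <= Rabs (x - y).
Proof.
  intros Hf Hb.
  assert (K : forall x y, x < y -> Rabs (f x - f y) <= Rabs (x - y)).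
  { intros x y Hxy. destruct (MVT_cor2 f f' x y Hxy) as [c [Ec _]]; [intros; apply Hf|].
    rewrite Rabs_minus_sym, (Rabs_minus_sym x), Ec, Rabs_mult.
    pose proof (Rabs_pos (y - x)). specialize (Hb c). nra. }
  intros x y. destruct (Rtotal_order x y) as [H|[H|H]].
  - auto.
  - subst. rewrite !Rminus_diag, Rabs_R0. lra.
  - rewrite Rabs_minus_sym, (Rabs_minus_sym x). auto.
Qed.

Definition cis (theta : R) : Cx := (cos theta, sin theta).

Lemma Cmod_cis theta : Cmod (cis theta) = 1.
Proof.
  unfold Cmod, cis; simpl fst; simpl snd.
  replace (cos theta ^ 2 + sin theta ^ 2) with 1; [apply sqrt_1|].
  rewrite <- (sin2_cos2 theta). unfold Rsqr. ring.
Qed.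

Lemma cis_lip theta theta' : Cmod (Csub (cis theta) (cis theta')) <= 2 * Rabs (theta - theta').
Proof.
  eapply Rle_trans; [apply Cmod_le_abs|]. unfold cis, Csub, Cadd, Copp; simpl.
  pose proof (lipschitz_of_deriv_bound cos (fun x => - sin x) derivable_pt_lim_cos) as Hc.
  pose proof (lipschitz_of_deriv_bound sin cos derivable_pt_lim_sin) as Hs.
  assert (Bc : forall x, Rabs (- sin x) <= 1)
    by (intro x; rewrite Rabs_Ropp; apply Rabs_le, SIN_bound).
  assert (Bs : forall x, Rabs (cos x) <= 1) by (intro x; apply Rabs_le, COS_bound).
  specialize (Hc Bc theta theta'). specialize (Hs Bs theta theta'). unfold Rminus in *. lra.
Qed.

Section PolarDisk.
(* Points of the closed disk of radius rr in polar coordinates; the radius is clamped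
   to [0, rr] so that every pair (rho, theta) describes a point of the disk. *)
Variable rr : R.
Hypothesis Hrr : 0 < rr.

Definition clamp (x : R) : R := Rmax 0 (Rmin rr x).
Definition polar (rho theta : R) : Cx := Cmul (RtoC (clamp rho)) (cis theta).

Lemma clamp_bound x : 0 <= clamp x <= rr.
Proof. unfold clamp, Rmax, Rmin. repeat destruct Rle_dec; lra. Qed.

Lemma clamp_id x : 0 <= x <= rr -> clamp x = x.
Proof. intro. unfold clamp, Rmax, Rmin. repeat destruct Rle_dec; lra. Qed.

Lemma clamp_lip x y : Rabs (clamp x - clamp y) <= Rabs (x - y).
Proof. unfold clamp, Rmax, Rmin, Rabs. repeat destruct Rle_dec; repeat destruct Rcase_abs; lra. Qed.

Lemma polar_in rho theta : Cmod (polar rho theta) <= rr.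
Proof.
  unfold polar. rewrite Cmod_mul, Cmod_RtoC, Cmod_cis, Rmult_1_r.
  pose proof (clamp_bound rho). rewrite Rabs_right; lra.
Qed.

Lemma polar_lip_rho rho rho' theta :
  Cmod (Csub (polar rho theta) (polar rho' theta)) <= Rabs (rho - rho').
Proof.
  unfold polar. replace (Csub (Cmul (RtoC (clamp rho)) (cis theta)) (Cmul (RtoC (clamp rho')) (cis theta)))
    with (Cmul (RtoC (clamp rho - clamp rho')) (cis theta)) by (generalize (cis theta); intros; ceq; ring).
  rewrite Cmod_mul, Cmod_RtoC, Cmod_cis, Rmult_1_r. apply clamp_lip.
Qed.

Lemma polar_lip_theta rho theta theta' :
  Cmod (Csub (polar rho theta) (polar rho theta')) <= 2 * rr * Rabs (theta - theta').
Proof.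
  unfold polar. replace (Csub (Cmul (RtoC (clamp rho)) (cis theta)) (Cmul (RtoC (clamp rho)) (cis theta')))
    with (Cmul (RtoC (clamp rho)) (Csub (cis theta) (cis theta'))) by (generalize (cis theta) (cis theta'); intros; ceq; ring).
  rewrite Cmod_mul, Cmod_RtoC. pose proof (clamp_bound rho). rewrite Rabs_right by lra.
  pose proof (cis_lip theta theta'). pose proof (Cmod_ge0 (Csub (cis theta) (cis theta'))).
  replace (2 * rr * Rabs (theta - theta')) with (rr * (2 * Rabs (theta - theta'))) by ring.
  apply Rmult_le_compat; lra.
Qed.

Lemma polar_onto z : Cmod z <= rr -> exists theta, - PI <= theta <= PI /\ polar (Cmod z) theta = z.
Proof.
  intro Hz. pose proof PI_RGT_0. unfold polar. rewrite clamp_id by (split; auto; apply Cmod_ge0).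
  destruct (Req_dec (Cmod z) 0) as [E|E].
  { exists 0. split; [lra|]. rewrite E. rewrite (Cmod_eq0 z E). unfold cis. ceq; ring. }
  assert (Hr : 0 < Cmod z) by (pose proof (Cmod_ge0 z); lra).
  destruct z as [a b]. set (rho := Cmod (a, b)) in *.
  assert (Hrho : rho ^ 2 = a ^ 2 + b ^ 2) by (unfold rho; rewrite <- N2_Cmod; reflexivity).
  set (x := a / rho).
  assert (Hx : -1 <= x <= 1).
  { pose proof (Cmod_fst (a, b)) as Ha. simpl in Ha. fold rho in Ha.
    assert (Rabs x <= 1).
    { unfold x, Rdiv. rewrite Rabs_mult, Rabs_inv, (Rabs_right rho) by lra.
      apply Rmult_le_reg_r with rho; auto. rewrite Rmult_assoc, Rinv_l; lra. }
    pose proof (Rle_abs x). pose proof (Rle_abs (- x)). rewrite Rabs_Ropp in *. lra. }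
  assert (Hsin : sqrt (1 - x²) = Rabs b / rho).
  { rewrite <- (sqrt_Rsqr (Rabs b / rho)) by (apply Rmult_le_pos; [apply Rabs_pos | apply Rlt_le, Rinv_0_lt_compat; lra]).
    f_equal. unfold x, Rsqr.
    replace (Rabs b / rho * (Rabs b / rho)) with (Rabs b * Rabs b / rho ^ 2) by (field; lra).
    rewrite <- Rabs_mult, Rabs_right by nra.
    replace (b * b) with (rho ^ 2 - a ^ 2) by (rewrite Hrho; ring). field. lra. }
  pose proof (acos_bound x).
  destruct (Rle_lt_dec 0 b) as [Hb|Hb].
  - exists (acos x). split; [lra|]. unfold cis. rewrite cos_acos, sin_acos, Hsin, Rabs_right by lra.
    unfold x. ceq; field; lra.
  - exists (- acos x). split; [lra|]. unfold cis. rewrite cos_neg, sin_neg, cos_acos, sin_acos, Hsin, Rabs_left by lra.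
    unfold x. ceq; field; lra.
Qed.

(* A Lipschitz function on the closed disk attains its maximum there: maximise first
   over the angle, which gives a Lipschitz function of the radius, then over the radius. *)
Lemma disk_max (u : Cx -> R) L : 0 <= L ->
  (forall z w, Cmod z <= rr -> Cmod w <= rr -> Rabs (u z - u w) <= L * Cmod (Csub z w)) ->
  exists c, Cmod c <= rr /\ forall z, Cmod z <= rr -> u z <= u c.
Proof.
  intros HL Hu. pose proof PI_RGT_0.
  set (U := fun rho theta => u (polar rho theta)).
  assert (U_lip_theta : forall rho theta theta', Rabs (U rho theta - U rho theta') <= 2 * rr * L * Rabs (theta - theta')).
  { intros. unfold U. eapply Rle_trans; [apply Hu; apply polar_in|].
    replace (2 * rr * L * Rabs (theta - theta')) with (L * (2 * rr * Rabs (theta - theta'))) by ring.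
    apply Rmult_le_compat_l; auto. apply polar_lip_theta. }
  assert (U_lip_rho : forall rho rho' theta, Rabs (U rho theta - U rho' theta) <= L * Rabs (rho - rho')).
  { intros. unfold U. eapply Rle_trans; [apply Hu; apply polar_in|].
    apply Rmult_le_compat_l; auto. apply polar_lip_rho. }
  set (best := fun rho theta => (forall theta', - PI <= theta' <= PI -> U rho theta' <= U rho theta) /\ - PI <= theta <= PI).
  assert (Hbest : forall rho, best rho (epsilon (inhabits 0) (best rho))).
  { intro rho. apply epsilon_spec. apply continuity_ab_maj; [lra|]. intros theta0 _.
    apply (lipschitz_continuity_pt _ theta0 (2 * rr * L)); [nra|]. intro. apply U_lip_theta. }
  set (g := fun rho => U rho (epsilon (inhabits 0) (best rho))).
  assert (g_lip : forall rho rho', Rabs (g rho - g rho') <= L * Rabs (rho - rho')).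
  { intros rho rho'. unfold g.
    destruct (Hbest rho) as [A1 A2]. destruct (Hbest rho') as [B1 B2].
    specialize (A1 _ B2). specialize (B1 _ A2).
    pose proof (U_lip_rho rho rho' (epsilon (inhabits 0) (best rho))).
    pose proof (U_lip_rho rho rho' (epsilon (inhabits 0) (best rho'))).
    unfold Rabs in *. repeat destruct Rcase_abs; lra. }
  destruct (continuity_ab_maj g 0 rr ltac:(lra)) as [rs [Hrs _]].
  { intros rho0 _. apply (lipschitz_continuity_pt _ rho0 L); auto. }
  exists (polar rs (epsilon (inhabits 0) (best rs))). split; [apply polar_in|].
  intros z Hz. destruct (polar_onto z Hz) as [theta [Htheta <-]].
  change (U (Cmod z) theta <= g rs).
  apply Rle_trans with (g (Cmod z)); [apply (Hbest (Cmod z)); auto|].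
  apply Hrs. split; auto. apply Cmod_ge0.
Qed.

End PolarDisk.

(** * A Jack-type bound *)

(* The imaginary part of conj(z) w, complementing [dot] (its real part). *)
Definition cross (z w : Cx) : R := fst z * snd w - snd z * fst w.

Lemma N2_lip X Y B : Cmod X <= B -> Cmod Y <= B -> Rabs (N2 X - N2 Y) <= 2 * B * Cmod (Csub X Y).
Proof.
  intros HX HY. rewrite !N2_Cmod. pose proof (Cmod_sub_ge X Y). pose proof (Cmod_sub_ge Y X).
  rewrite Cmod_sub_sym in H0. pose proof (Cmod_ge0 X). pose proof (Cmod_ge0 Y).
  replace (Cmod X ^ 2 - Cmod Y ^ 2) with ((Cmod X - Cmod Y) * (Cmod X + Cmod Y)) by ring.
  rewrite Rabs_mult, (Rabs_right (Cmod X + Cmod Y)) by lra.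
  assert (Rabs (Cmod X - Cmod Y) <= Cmod (Csub X Y)) by (unfold Rabs; destruct Rcase_abs; lra).
  pose proof (Rabs_pos (Cmod X - Cmod Y)). nra.
Qed.

Lemma taylor_lipschitz F F1 R0 C r B0 B1 : TaylorBound F F1 R0 C -> 0 <= C -> 0 < r < R0 ->
  (forall z, Cmod z <= r -> Cmod (F z) <= B0 /\ Cmod (F1 z) <= B1) ->
  exists L, 0 <= L /\ forall z w, Cmod z <= r -> Cmod w <= r -> Cmod (Csub (F w) (F z)) <= L * Cmod (Csub w z).
Proof.
  intros HF HC Hr HB.
  assert (B0p : 0 <= B0) by (destruct (HB Cz0) as [H _]; [rewrite Cmod_z0; lra | pose proof (Cmod_ge0 (F Cz0)); lra]).
  assert (B1p : 0 <= B1) by (destruct (HB Cz0) as [_ H]; [rewrite Cmod_z0; lra | pose proof (Cmod_ge0 (F1 Cz0)); lra]).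
  set (d := R0 - r). assert (Hd : 0 < d) by (unfold d; lra).
  assert (0 <= 2 * B0 / d) by (apply Rmult_le_pos; [lra | apply Rlt_le, Rinv_0_lt_compat; lra]).
  exists (B1 + C * d + 2 * B0 / d). split; [nra|].
  intros z w Hz Hw. set (h := Csub w z). pose proof (Cmod_ge0 h).
  destruct (Rle_lt_dec (Cmod h) d).
  - (* close points: first-order expansion *)
    specialize (HF z h ltac:(unfold d in *; lra)). replace (Cadd z h) with w in HF by (unfold h; ceq; ring).
    destruct (HB z Hz) as [_ HB1].
    replace (Csub (F w) (F z)) with (Cadd (Csub (Csub (F w) (F z)) (Cmul h (F1 z))) (Cmul h (F1 z))) by (ceq; ring).
    eapply Rle_trans. apply Cmod_add. rewrite Cmod_mul.
    assert (C * Cmod h ^ 2 <= C * d * Cmod h)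
      by (assert (Cmod h * Cmod h <= d * Cmod h) by nra; simpl; nra).
    assert (Cmod h * Cmod (F1 z) <= B1 * Cmod h) by nra.
    nra.
  - (* distant points: the bound on F *)
    destruct (HB z Hz) as [H0z _]. destruct (HB w Hw) as [H0w _].
    eapply Rle_trans. apply Cmod_sub_le.
    assert (2 * B0 <= 2 * B0 / d * Cmod h).
    { replace (2 * B0 / d * Cmod h) with (2 * B0 * (Cmod h / d)) by (field; lra).
      assert (1 <= Cmod h / d) by (apply Rmult_le_reg_r with d; auto; unfold Rdiv; rewrite Rmult_assoc, Rinv_l; lra).
      nra. }
    assert (0 <= (B1 + C * d) * Cmod h) by (apply Rmult_le_pos; nra).
    nra.
Qed.

Lemma line_radial c w t : line c (Cmul c w) t = Cmul c (Cadd Cone (Cmul (RtoC t) w)).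
Proof. unfold line. ceq; ring. Qed.

Lemma inward_step_in_disk w t : fst w < 0 -> 0 < t < - 2 * fst w / N2 w ->
  Cmod (Cadd Cone (Cmul (RtoC t) w)) <= 1.
Proof.
  intros Hw [Ht1 Ht2]. pose proof (N2_ge0 w) as HNw. assert (0 < N2 w) by (unfold N2 in *; nra).
  rewrite <- Cmod_one. apply Cmod_le_N2.
  assert (t * N2 w < - 2 * fst w).
  { apply Rmult_lt_compat_r with (r := N2 w) in Ht2; auto.
    unfold Rdiv in Ht2. rewrite Rmult_assoc, Rinv_l, Rmult_1_r in Ht2 by lra. lra. }
  unfold N2 in *. simpl. nra.
Qed.

Lemma zero_of_arbitrarily_small b A : (forall d, 0 < d -> Rabs b <= d * A) -> b = 0.
Proof.
  intro H. destruct (Req_dec b 0) as [|Hb0]; auto. exfalso. apply (Rabs_no_R0 b Hb0).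
  apply Rle_antisym; [|apply Rabs_pos]. apply Rle_plus_epsilon. intros e He. rewrite Rplus_0_l.
  set (K := Rabs A + 1). assert (0 < K) by (unfold K; pose proof (Rabs_pos A); lra).
  eapply Rle_trans; [apply (H (e / K)); apply Rdiv_lt_0_compat; lra|].
  replace e with (e / K * K) at 2 by (field; lra).
  apply Rmult_le_compat_l; [apply Rlt_le, Rdiv_lt_0_compat; lra | unfold K; apply Rle_trans with (Rabs A); [apply Rle_abs | lra]].
Qed.

Section MaximumOfPerturbedModulus.
Variables (Q Q1 Q2 : Cx -> Cx) (R0 C1 C2 r eps : R) (c : Cx).
Hypotheses (HQ : TaylorBound Q Q1 R0 C1) (HC1 : 0 <= C1) (Hr : 0 < r < R0).
Hypothesis Hmax : forall z, Cmod z <= r -> ueps Q eps z <= ueps Q eps c.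

(* The maximum is not interior: the Laplacian of the function, 4|Q1|^2 + 4 eps,
   is positive, so one of the two coordinate second derivatives is positive. *)
Lemma perturbed_max_not_interior :
  TaylorBound Q1 Q2 R0 C2 -> 0 <= C2 -> 0 < eps -> Cmod c < r -> False.
Proof.
  intros HQ1 HC2 He Hc.
  set (D := fun v => ueps_d2 Q Q1 Q2 eps c v 0).
  assert (Hpos : forall v, Cmod v = 1 -> 0 < D v -> False).
  { intros v Hv HD. set (dl := r - Cmod c).
    assert (Hin : forall t, - dl < t < dl -> Cmod (line c v t) < r).
    { intros t Ht. pose proof (Cmod_line c v t) as Hl. rewrite Hv in Hl.
      assert (Rabs t < dl) by (unfold Rabs; destruct Rcase_abs; lra). unfold dl in *. lra. }
    apply (no_max_of_pos_second_deriv (fun s => ueps Q eps (line c v s)) (ueps_d1 Q Q1 eps c v) (D v) dl).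
    - unfold dl; lra.
    - intros t Ht. apply (ueps_line_deriv Q Q1 R0 C1); auto. specialize (Hin t Ht). lra.
    - apply (ueps_line_deriv2 Q Q1 Q2 R0 C1 C2); auto. rewrite line0. lra.
    - auto.
    - intros t Ht. rewrite line0. apply Hmax. specialize (Hin t Ht). lra. }
  assert (Hsum : D (1, 0) + D (0, 1) = 4 * N2 (Q1 c) + 4 * eps).
  { unfold D, ueps_d2, N2, dot. rewrite !line0. simpl. ring. }
  pose proof (N2_ge0 (Q1 c)).
  assert (M1 : Cmod (1, 0) = 1) by exact Cmod_one.
  assert (M2 : Cmod (0, 1) = 1) by exact (Complex.Cmod_Ci).
  destruct (Rlt_le_dec 0 (D (1, 0))).
  - apply (Hpos (1, 0)); auto.
  - apply (Hpos (0, 1)); auto. lra.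
Qed.

(* At a boundary maximum c, the first-order conditions in the inward directions c w
   (Re w < 0) say that conj(Q c) c Q1(c) is real and >= -eps r^2. *)
Lemma perturbed_max_boundary : 0 <= eps -> Cmod c = r ->
  dot (Q c) (Cmul c (Q1 c)) >= - (eps * r ^ 2) /\ cross (Q c) (Cmul c (Q1 c)) = 0.
Proof.
  intros He Hc.
  set (a := dot (Q c) (Cmul c (Q1 c))). set (b := cross (Q c) (Cmul c (Q1 c))).
  assert (Nc : fst c ^ 2 + snd c ^ 2 = r ^ 2) by (rewrite <- Hc; apply N2_Cmod).
  assert (Dir : forall w, fst w < 0 -> 2 * (fst w * a - snd w * b) + eps * (2 * fst w * r ^ 2) <= 0).
  { intros w Hw.
    assert (E : ueps_d1 Q Q1 eps c (Cmul c w) 0 = 2 * (fst w * a - snd w * b) + eps * (2 * fst w * r ^ 2)).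
    { unfold ueps_d1, a, b, dot, cross. rewrite line0, <- Nc. simpl. ring. }
    rewrite <- E. pose proof (N2_ge0 w) as HNw. assert (0 < N2 w) by (unfold N2 in *; nra).
    apply (deriv_nonpos_at_right_max (fun s => ueps Q eps (line c (Cmul c w) s)) _ (- 2 * fst w / N2 w)).
    - apply Rdiv_lt_0_compat; lra.
    - apply (ueps_line_deriv Q Q1 R0 C1); auto. rewrite line0; lra.
    - intros t Ht. rewrite line0. apply Hmax.
      rewrite line_radial, Cmod_mul, Hc. pose proof (inward_step_in_disk w t Hw Ht). nra. }
  split.
  - specialize (Dir (-1, 0) ltac:(simpl; lra)). simpl in Dir. lra.
  - apply (zero_of_arbitrarily_small b (a + eps * r ^ 2)). intros d Hd.
    pose proof (Dir (- d, 1) ltac:(simpl; lra)). pose proof (Dir (- d, -1) ltac:(simpl; lra)).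
    simpl in *. unfold Rabs; destruct Rcase_abs; nra.
Qed.

End MaximumOfPerturbedModulus.

Lemma aligned_lower_bound (nu q p : Cx) e : fst nu < 0 -> 0 <= e -> dot q p >= - e -> cross q p = 0 ->
  N2 nu * N2 q <= N2 (Csub (Cmul nu q) p) + 2 * Cmod nu * e.
Proof.
  intros Hn He Ha Hb.
  assert (Id : N2 q * N2 (Csub (Cmul nu q) p) =
               (fst nu * N2 q - dot q p) ^ 2 + (snd nu * N2 q - cross q p) ^ 2)
    by (unfold N2, dot, cross; simpl; ring).
  rewrite Hb in Id.
  assert (HN : - fst nu <= Cmod nu) by (pose proof (Cmod_fst nu); unfold Rabs in *; destruct Rcase_abs; lra).
  assert (HN2 : N2 nu = fst nu ^ 2 + snd nu ^ 2) by reflexivity.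
  pose proof (N2_ge0 q). pose proof (N2_ge0 (Csub (Cmul nu q) p)). pose proof (Cmod_ge0 nu).
  destruct (Req_dec (N2 q) 0) as [E|E]; [rewrite E; nra|].
  assert (Hx : 0 < N2 q) by lra.
  apply Rmult_le_reg_l with (N2 q); auto.
  assert (- fst nu * N2 q * dot q p >= - fst nu * N2 q * (- e)).
  { assert (0 <= - fst nu * N2 q) by nra. apply Rle_ge, Rmult_le_compat_l; lra. }
  assert (- fst nu * N2 q * e <= Cmod nu * N2 q * e) by (apply Rmult_le_compat_r; auto; nra).
  nra.
Qed.

Lemma ueps_lipschitz Q B0 L r eps : 0 <= eps ->
  (forall z, Cmod z <= r -> Cmod (Q z) <= B0) ->
  (forall z w, Cmod z <= r -> Cmod w <= r -> Cmod (Csub (Q w) (Q z)) <= L * Cmod (Csub w z)) ->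
  forall z w, Cmod z <= r -> Cmod w <= r ->
    Rabs (ueps Q eps z - ueps Q eps w) <= (2 * B0 * L + eps * (2 * r)) * Cmod (Csub z w).
Proof.
  intros He HB HL z w Hz Hw. unfold ueps.
  replace (N2 (Q z) + eps * N2 z - (N2 (Q w) + eps * N2 w)) with
    ((N2 (Q z) - N2 (Q w)) + eps * (N2 z - N2 w)) by ring.
  eapply Rle_trans. apply Rabs_triang. rewrite Rabs_mult, (Rabs_right eps) by lra.
  pose proof (N2_lip (Q z) (Q w) B0 (HB z Hz) (HB w Hw)).
  pose proof (N2_lip z w r Hz Hw).
  pose proof (HL w z Hw Hz). pose proof (Cmod_ge0 (Csub z w)).
  assert (0 <= B0) by (pose proof (HB z Hz); pose proof (Cmod_ge0 (Q z)); lra).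
  assert (2 * B0 * Cmod (Csub (Q z) (Q w)) <= 2 * B0 * (L * Cmod (Csub z w))) by (apply Rmult_le_compat_l; lra).
  assert (eps * Rabs (N2 z - N2 w) <= eps * (2 * r * Cmod (Csub z w))) by (apply Rmult_le_compat_l; lra).
  nra.
Qed.

Lemma perturbed_max_on_circle Q Q1 Q2 R0 C1 C2 r B0 B1 eps :
  TaylorBound Q Q1 R0 C1 -> 0 <= C1 -> TaylorBound Q1 Q2 R0 C2 -> 0 <= C2 -> 0 < r < R0 -> 0 < eps ->
  (forall z, Cmod z <= r -> Cmod (Q z) <= B0 /\ Cmod (Q1 z) <= B1) ->
  exists c, Cmod c = r /\ forall z, Cmod z <= r -> ueps Q eps z <= ueps Q eps c.
Proof.
  intros HQ HC1 HQ1 HC2 Hr Heps HB.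
  destruct (taylor_lipschitz Q Q1 R0 C1 r B0 B1 HQ HC1 Hr HB) as [L [HL HLip]].
  assert (HB0 : forall z, Cmod z <= r -> Cmod (Q z) <= B0) by (intros; apply HB; auto).
  assert (0 <= B0) by (pose proof (HB0 Cz0 ltac:(rewrite Cmod_z0; lra)); pose proof (Cmod_ge0 (Q Cz0)); lra).
  destruct (disk_max r ltac:(lra) (ueps Q eps) (2 * B0 * L + eps * (2 * r))) as [c [Hc Hmax]].
  - assert (0 <= 2 * B0 * L) by (apply Rmult_le_pos; lra). nra.
  - apply ueps_lipschitz; auto; lra.
  - exists c. split; auto. destruct (Rlt_le_dec (Cmod c) r) as [Hlt|]; [|lra]. exfalso.
    exact (perturbed_max_not_interior Q Q1 Q2 R0 C1 C2 r eps c HQ HC1 Hr Hmax HQ1 HC2 Heps Hlt).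
Qed.

Lemma jack_bound_eps Q Q1 Q2 R0 C1 C2 r B0 B1 nu M n eps :
  TaylorBound Q Q1 R0 C1 -> 0 <= C1 -> TaylorBound Q1 Q2 R0 C2 -> 0 <= C2 -> 0 < r < R0 ->
  (forall z, Cmod z <= r -> Cmod (Q z) <= B0 /\ Cmod (Q1 z) <= B1) -> fst nu < 0 ->
  (forall z, Cmod z <= r -> Cmod z ^ n * Cmod (Csub (Cmul nu (Q z)) (Cmul z (Q1 z))) < M) -> 0 < eps ->
  forall z, Cmod z <= r -> N2 (Q z) <= (M / (r ^ n * Cmod nu)) ^ 2 + eps * r ^ 2 * (1 + 2 / Cmod nu).
Proof.
  intros HQ HC1 HQ1 HC2 Hr HB Hnu Hkey Heps z1 Hz1.
  assert (HNv : 0 < Cmod nu) by (pose proof (Cmod_fst nu); unfold Rabs in *; destruct Rcase_abs; lra).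
  assert (HRn : 0 < r ^ n) by (apply pow_lt; lra).
  destruct (perturbed_max_on_circle Q Q1 Q2 R0 C1 C2 r B0 B1 eps HQ HC1 HQ1 HC2 Hr Heps HB)
    as [c [Hcr Hmax]].
  assert (Hc : Cmod c <= r) by lra.
  destruct (perturbed_max_boundary Q Q1 R0 C1 r eps c HQ HC1 Hr Hmax ltac:(lra) Hcr) as [Ha Hb].
  pose proof (aligned_lower_bound nu (Q c) (Cmul c (Q1 c)) (eps * r ^ 2) Hnu ltac:(nra) Ha Hb) as Hal.
  rewrite (N2_Cmod nu) in Hal.
  specialize (Hkey c Hc). rewrite Hcr in Hkey.
  set (X := Csub (Cmul nu (Q c)) (Cmul c (Q1 c))) in *.
  assert (HX : r ^ n * r ^ n * N2 X <= M * M).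
  { rewrite N2_Cmod. pose proof (Cmod_ge0 X).
    assert (0 <= r ^ n * Cmod X) by (apply Rmult_le_pos; lra).
    replace (r ^ n * r ^ n * Cmod X ^ 2) with ((r ^ n * Cmod X) * (r ^ n * Cmod X)) by ring.
    apply Rmult_le_compat; lra. }
  assert (HQc : N2 (Q c) <= (M / (r ^ n * Cmod nu)) ^ 2 + 2 * (eps * r ^ 2) / Cmod nu).
  { assert (Hpos : 0 < Cmod nu ^ 2 * (r ^ n * r ^ n))
      by (apply Rmult_lt_0_compat; [apply pow_lt | apply Rmult_lt_0_compat]; lra).
    apply Rmult_le_reg_l with (Cmod nu ^ 2 * (r ^ n * r ^ n)); auto.
    replace (Cmod nu ^ 2 * (r ^ n * r ^ n) * ((M / (r ^ n * Cmod nu)) ^ 2 + 2 * (eps * r ^ 2) / Cmod nu))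
      with (M * M + r ^ n * r ^ n * (2 * Cmod nu * (eps * r ^ 2))) by (field; lra).
    assert (r ^ n * r ^ n * (Cmod nu ^ 2 * N2 (Q c)) <= r ^ n * r ^ n * (N2 X + 2 * Cmod nu * (eps * r ^ 2)))
      by (apply Rmult_le_compat_l; nra).
    lra. }
  specialize (Hmax z1 Hz1). unfold ueps in Hmax. rewrite (N2_Cmod c), Hcr in Hmax.
  pose proof (N2_ge0 z1). assert (0 <= eps * N2 z1) by nra.
  replace (eps * r ^ 2 * (1 + 2 / Cmod nu)) with (eps * r ^ 2 + 2 * (eps * r ^ 2) / Cmod nu) by (field; lra).
  lra.
Qed.

(* Jack-type bound: letting eps -> 0, |Q| <= M / (r^n |nu|) on the closed disk. *)
Lemma jack_bound Q Q1 Q2 R0 C1 C2 r B0 B1 nu M n :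
  TaylorBound Q Q1 R0 C1 -> 0 <= C1 -> TaylorBound Q1 Q2 R0 C2 -> 0 <= C2 -> 0 < r < R0 ->
  (forall z, Cmod z <= r -> Cmod (Q z) <= B0 /\ Cmod (Q1 z) <= B1) -> fst nu < 0 ->
  (forall z, Cmod z <= r -> Cmod z ^ n * Cmod (Csub (Cmul nu (Q z)) (Cmul z (Q1 z))) < M) ->
  forall z, Cmod z <= r -> N2 (Q z) <= (M / (r ^ n * Cmod nu)) ^ 2.
Proof.
  intros HQ HC1 HQ1 HC2 Hr HB Hnu Hkey z Hz.
  assert (HNv : 0 < Cmod nu) by (pose proof (Cmod_fst nu); unfold Rabs in *; destruct Rcase_abs; lra).
  set (K := r ^ 2 * (1 + 2 / Cmod nu)).
  assert (HK : 0 < K) by (unfold K; assert (0 < 2 / Cmod nu) by (apply Rdiv_lt_0_compat; lra); nra).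
  apply Rle_plus_epsilon. intros delta Hdelta.
  pose proof (jack_bound_eps Q Q1 Q2 R0 C1 C2 r B0 B1 nu M n (delta / K) HQ HC1 HQ1 HC2 Hr HB Hnu Hkey
                ltac:(apply Rdiv_lt_0_compat; lra) z Hz) as H.
  replace (delta / K * r ^ 2 * (1 + 2 / Cmod nu)) with delta in H by (unfold K; field; lra).
  exact H.
Qed.

(** * The decomposition p = 1 + z^n Q *)

Lemma taylor_quotient F F1 r C z h : TaylorBound F F1 r C -> Cmod z + Cmod h <= r -> h <> Cz0 ->
  Cmod (Csub (Cdiv (Csub (F (Cadd z h)) (F z)) h) (F1 z)) <= C * Cmod h.
Proof.
  intros HF Hin Hh. specialize (HF z h Hin). pose proof (Cmod_pos h Hh).
  rewrite Cdiv_sub, Cmod_mul, Cmod_inv by auto.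
  apply Rmult_le_reg_r with (Cmod h); auto. rewrite Rmult_assoc, Rinv_l by lra.
  simpl in HF. nra.
Qed.

Lemma deriv_unique p F F1 z l r C : Cderiv_at p z l -> TaylorBound F F1 r C -> 0 <= C ->
  Cmod z < r -> (forall w, Cmod w < r -> p w = F w) -> l = F1 z.
Proof.
  intros Hd HF HC Hz Hpf.
  assert (E : Cmod (Csub l (F1 z)) <= 0).
  { apply Rle_plus_epsilon. intros e He. rewrite Rplus_0_l.
    destruct (Hd (e / 2) ltac:(lra)) as [dl [Hdl Hh]].
    set (t := Rmin (Rmin (dl / 2) ((r - Cmod z) / 2)) (e / (2 * (C + 1)))).
    assert (Ht : 0 < t) by (unfold t; repeat apply Rmin_pos; try apply Rdiv_lt_0_compat; lra).
    assert (Ht1 : t <= dl / 2) by (unfold t; eapply Rle_trans; apply Rmin_l).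
    assert (Ht2 : t <= (r - Cmod z) / 2) by (unfold t; eapply Rle_trans; [apply Rmin_l | apply Rmin_r]).
    assert (Ht3 : t <= e / (2 * (C + 1))) by (unfold t; apply Rmin_r).
    set (h := RtoC t).
    assert (Hht : Cmod h = t) by (unfold h; rewrite Cmod_RtoC, Rabs_right; lra).
    assert (Hh0 : h <> Cz0) by (intro E; rewrite E, Cmod_z0 in Hht; lra).
    specialize (Hh h ltac:(rewrite Hht; lra)).
    assert (Hz1 : Cmod (Cadd z h) < r) by (pose proof (Cmod_add z h); lra).
    rewrite (Hpf _ Hz1), (Hpf _ Hz) in Hh.
    pose proof (taylor_quotient F F1 r C z h HF ltac:(lra) Hh0) as HQ. rewrite Hht in HQ.
    assert (C * t <= e / 2).
    { apply Rle_trans with ((C + 1) * t); [lra|].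
      replace (e / 2) with ((C + 1) * (e / (2 * (C + 1)))) by (field; lra).
      apply Rmult_le_compat_l; lra. }
    set (D := Cdiv (Csub (F (Cadd z h)) (F z)) h) in *.
    replace (Csub l (F1 z)) with (Cadd (Csub D (F1 z)) (Copp (Csub D l))) by (ceq; ring).
    eapply Rle_trans; [apply Cmod_add|]. rewrite Cmod_opp. lra. }
  assert (Cmod (Csub l (F1 z)) = 0) by (pose proof (Cmod_ge0 (Csub l (F1 z))); lra).
  replace l with (Cadd (Csub l (F1 z)) (F1 z)) by (ceq; ring).
  rewrite (Cmod_eq0 _ H). ceq; ring.
Qed.

Section ShiftedSeries.
(* The coefficients of p in H[1, m+1]: a 0 = 1 and a k = 0 for 1 <= k <= m. *)
Variables (a : nat -> Cx) (m : nat).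
Hypothesis Ha0 : a 0%nat = Cone.
Hypothesis Haz : forall k, (1 <= k < S m)%nat -> a k = Cz0.

(* The coefficients of Q = (p - 1) / z^(m+1), and those of z p'. *)
Definition tail_coef (k : nat) : Cx := a (k + S m)%nat.
Definition zder_coef (k : nat) : Cx := Cmul (RtoC (INR k)) (a k).

Lemma psum_low z k : (k <= m)%nat -> psum a z k = Cone.
Proof.
  unfold psum. induction k as [|k IH]; intro Hk.
  - simpl. rewrite Ha0. ceq; ring.
  - simpl. rewrite IH, Haz by lia. generalize (Cpow z (S k)). intros. ceq; ring.
Qed.

Lemma psum_split z N : psum a z (N + S m) = Cadd Cone (Cmul (Cpow z (S m)) (psum tail_coef z N)).
Proof.
  unfold psum, tail_coef. induction N as [|N IH].
  - simpl plus. change (Csum (fun k => Cmul (a k) (Cpow z k)) (S m)) with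
      (Cadd (psum a z m) (Cmul (a (S m)) (Cpow z (S m)))). rewrite psum_low by lia.
    simpl Csum. simpl (0 + S m)%nat. change (Cpow z 0) with Cone.
    generalize (a (S m)) (Cpow z (S m)). intros. ceq; ring.
  - change (Csum (fun k => Cmul (a k) (Cpow z k)) (S N + S m)) with
      (Cadd (Csum (fun k => Cmul (a k) (Cpow z k)) (N + S m)) (Cmul (a (S (N + S m))) (Cpow z (S (N + S m))))).
    change (Csum (fun k => Cmul (a (k + S m)%nat) (Cpow z k)) (S N)) with
      (Cadd (Csum (fun k => Cmul (a (k + S m)%nat) (Cpow z k)) N) (Cmul (a (S (N + S m))) (Cpow z (S N)))).
    rewrite IH.
    replace (Cpow z (S (N + S m))) with (Cmul (Cpow z (S m)) (Cpow z (S N)))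
      by (rewrite <- Cpow_add; f_equal; lia).
    generalize (Cpow z (S m)) (Cpow z (S N)) (a (S (N + S m)))
      (Csum (fun k => Cmul (a (k + S m)%nat) (Cpow z k)) N). intros. ceq; ring.
Qed.

Lemma psum_zder_low z k : (k <= m)%nat -> psum zder_coef z k = Cz0.
Proof.
  unfold psum, zder_coef. induction k as [|k IH]; intro Hk.
  - simpl. ceq; ring.
  - simpl Csum. rewrite IH, Haz by lia. generalize (Cpow z (S k)). intros. ceq; ring.
Qed.

Lemma psum_zder z N : Cmul z (psum (der a) z N) = psum zder_coef z (S N).
Proof.
  unfold psum, zder_coef, der. induction N as [|N IH].
  - simpl. ceq; ring.
  - change (Csum (fun k => Cmul (Cmul (RtoC (INR k)) (a k)) (Cpow z k)) (S (S N))) with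
     (Cadd (Csum (fun k => Cmul (Cmul (RtoC (INR k)) (a k)) (Cpow z k)) (S N))
           (Cmul (Cmul (RtoC (INR (S (S N)))) (a (S (S N)))) (Cpow z (S (S N))))).
    rewrite <- IH. cbn [Csum]. change (Cpow z (S (S N))) with (Cmul z (Cpow z (S N))).
    generalize (Csum (fun k => Cmul (Cmul (RtoC (INR (S k))) (a (S k))) (Cpow z k)) N)
      (Cpow z (S N)) (a (S (S N))) (INR (S (S N))). intros. ceq; ring.
Qed.

Lemma psum_zder_split z N : psum zder_coef z (S N + S m) =
  Cmul (Cpow z (S m)) (Cadd (Cmul (RtoC (INR (S m))) (psum tail_coef z (S N)))
                            (Cmul z (psum (der tail_coef) z N))).
Proof.
  unfold psum, tail_coef, zder_coef, der. induction N as [|N IH].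
  - change (S 0 + S m)%nat with (S (S m)).
    change (Csum (fun k => Cmul (Cmul (RtoC (INR k)) (a k)) (Cpow z k)) (S (S m))) with
      (Cadd (Cadd (psum zder_coef z m) (Cmul (Cmul (RtoC (INR (S m))) (a (S m))) (Cpow z (S m))))
            (Cmul (Cmul (RtoC (INR (S (S m)))) (a (S (S m)))) (Cpow z (S (S m))))).
    rewrite psum_zder_low by lia. simpl Csum. simpl plus.
    change (Cpow z (S (S m))) with (Cmul z (Cpow z (S m))). change (Cpow z 1) with (Cmul z Cone).
    change (Cpow z 0) with Cone. rewrite (S_INR (S m)).
    generalize (Cpow z (S m)) (a (S m)) (a (S (S m))) (INR (S m)). intros. ceq; ring.
  - change (S (S N) + S m)%nat with (S (S N + S m)).
    change (Csum (fun k => Cmul (Cmul (RtoC (INR k)) (a k)) (Cpow z k)) (S (S N + S m))) with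
      (Cadd (Csum (fun k => Cmul (Cmul (RtoC (INR k)) (a k)) (Cpow z k)) (S N + S m))
        (Cmul (Cmul (RtoC (INR (S (S N + S m)))) (a (S (S N + S m)))) (Cpow z (S (S N + S m))))).
    rewrite IH. clear IH.
    change (Csum (fun k => Cmul (a (k + S m)%nat) (Cpow z k)) (S (S N))) with
      (Cadd (Csum (fun k => Cmul (a (k + S m)%nat) (Cpow z k)) (S N)) (Cmul (a (S (S N) + S m)%nat) (Cpow z (S (S N))))).
    change (Csum (fun k => Cmul (Cmul (RtoC (INR (S k))) (a (S k + S m)%nat)) (Cpow z k)) (S N)) with
      (Cadd (Csum (fun k => Cmul (Cmul (RtoC (INR (S k))) (a (S k + S m)%nat)) (Cpow z k)) N)
         (Cmul (Cmul (RtoC (INR (S (S N)))) (a (S (S N) + S m)%nat)) (Cpow z (S N)))).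
    replace (Cpow z (S (S N + S m))) with (Cmul (Cpow z (S m)) (Cpow z (S (S N))))
      by (rewrite <- Cpow_add; f_equal; lia).
    change (Cpow z (S (S N))) with (Cmul z (Cpow z (S N))).
    replace (INR (S (S N + S m))) with (INR (S m) + INR (S (S N))) by (rewrite <- plus_INR; f_equal; lia).
    change (S (S N + S m)) with (S (S N) + S m)%nat.
    generalize (Cpow z (S m)) (Cpow z (S N)) (a (S (S N) + S m)%nat) (INR (S m)) (INR (S (S N)))
      (Csum (fun k => Cmul (a (k + S m)%nat) (Cpow z k)) (S N))
      (Csum (fun k => Cmul (Cmul (RtoC (INR (S k))) (a (S k + S m)%nat)) (Cpow z k)) N). intros. ceq; ring.
Qed.

End ShiftedSeries.

Lemma psum_origin a N : psum a Cz0 N = a 0%nat.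
Proof.
  unfold psum. induction N as [|N IH]; cbn [Csum].
  - simpl. generalize (a 0%nat). intros. ceq; ring.
  - rewrite IH, Cpow_z0. generalize (a 0%nat) (a (S N)). intros. ceq; ring.
Qed.

Lemma H_decomposition a m p p' :
  a 0%nat = Cone -> (forall k, (1 <= k < S m)%nat -> a k = Cz0) ->
  (forall z, inU z -> Cseries_cv (fun k => Cmul (a k) (Cpow z k)) (p z)) ->
  (forall z, inU z -> Cderiv_at p z (p' z)) ->
  forall z, inU z ->
    p z = Cadd Cone (Cmul (Cpow z (S m)) (SF (tail_coef a m) z)) /\
    Cmul z (p' z) = Cmul (Cpow z (S m)) (Cadd (Cmul (RtoC (INR (S m))) (SF (tail_coef a m) z))
                                               (Cmul z (SF (der (tail_coef a m)) z))).
Proof.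
  intros Ha0 Haz Hser Hd z Hz.
  assert (Ra : rad1 a) by (apply (rad1_of_cv a p); auto).
  assert (Rb : rad1 (tail_coef a m)) by (apply rad1_shift; auto).
  split.
  - apply (Ccv_unique (fun N => psum a z (N + S m))); [apply Ccv_shift, (Hser z Hz)|].
    apply (Ccv_eventually (fun N => Cadd Cone (Cmul (Cpow z (S m)) (psum (tail_coef a m) z N)))) with 0%nat.
    { intros N _. rewrite psum_split; auto. }
    apply Ccv_add; [apply Ccv_const | apply Ccv_mulc, SF_spec; auto].
  -
    assert (Hp' : p' z = SF (der a) z).
    { unfold inU in Hz. set (r := (1 + Cmod z) / 2). pose proof (Cmod_ge0 z).
      destruct (SF_taylor a r Ra ltac:(unfold r; lra)) as [C [HC HT]].
      apply (deriv_unique p (SF a) (SF (der a)) z (p' z) r C); auto; [unfold r; lra|].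
      intros w Hw. apply (Ccv_unique (psum a w)); [apply Hser | apply SF_spec]; unfold inU, r in *; auto; lra. }
    rewrite Hp'.
    apply (Ccv_unique (fun N => Cmul z (psum (der a) z (N + S m)))).
    + apply Ccv_mulc, Ccv_shift, SF_spec; auto. apply rad1_der; auto.
    + apply (Ccv_eventually (fun N => Cmul (Cpow z (S m)) (Cadd (Cmul (RtoC (INR (S m))) (psum (tail_coef a m) z (S N)))
                                                          (Cmul z (psum (der (tail_coef a m)) z N))))) with 0%nat.
      { intros N _. rewrite (psum_zder a z (N + S m)). change (S (N + S m)) with (S N + S m)%nat.
        rewrite (psum_zder_split a m Haz z N). reflexivity. }
      apply Ccv_mulc, Ccv_add; apply Ccv_mulc.
      * apply (Ccv_S (psum (tail_coef a m) z)), SF_spec; auto.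
      * apply SF_spec; auto. apply rad1_der; auto.
Qed.

Lemma subord_disk f lambda : 0 < Cmod lambda -> subord f (fun z => Cadd Cone (Cmul lambda z)) ->
  forall z, inU z -> Cmod (Csub (f z) Cone) < Cmod lambda.
Proof.
  intros Hl [w [_ [_ [Hw1 Hwe]]]] z Hz. rewrite (Hwe z Hz).
  replace (Csub (Cadd Cone (Cmul lambda (w z))) Cone) with (Cmul lambda (w z)) by (generalize (w z); intros; ceq; ring).
  rewrite Cmod_mul. specialize (Hw1 z Hz). pose proof (Cmod_ge0 (w z)).
  replace (Cmod lambda) with (Cmod lambda * 1) at 2 by ring. apply Rmult_lt_compat_l; lra.
Qed.

(* Conversely, a power series with constant term 1 satisfying |p - 1| < |lambda1| on U
   is subordinate to 1 + lambda1 z, via w = (p - 1) / lambda1. *)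
Lemma subord_of_disk p a lambda1 : lambda1 <> Cz0 -> a 0%nat = Cone ->
  (forall z, inU z -> Cseries_cv (fun k => Cmul (a k) (Cpow z k)) (p z)) ->
  (forall z, inU z -> Cmod (Csub (p z) Cone) < Cmod lambda1) ->
  subord p (fun z => Cadd Cone (Cmul lambda1 z)).
Proof.
  intros Hl Ha0 Hser Hbound. pose proof (Cmod_pos lambda1 Hl).
  exists (fun z => Cmul (Cinv lambda1) (Csub (p z) Cone)). repeat split.
  - exists (fun k => match k with O => Cz0 | S _ => Cmul (Cinv lambda1) (a k) end).
    intros z Hz.
    apply (Ccv_eventually (fun N => Cmul (Cinv lambda1) (Csub (psum a z N) Cone))) with 0%nat.
    { intros N _. unfold psum. induction N as [|N IH].
      - simpl. rewrite Ha0. generalize (Cinv lambda1). intros. ceq; ring.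
      - simpl Csum. rewrite <- IH by lia. generalize (Cinv lambda1) (a (S N)) (Cpow z (S N))
          (Csum (fun k => Cmul (a k) (Cpow z k)) N). intros. ceq; ring. }
    apply Ccv_mulc, Ccv_sub; [exact (Hser z Hz) | apply Ccv_const].
  - cbv beta. assert (Hp0 : p Cz0 = Cone).
    { apply (Ccv_unique (psum a Cz0)); [apply Hser; unfold inU; rewrite Cmod_z0; lra|].
      rewrite <- Ha0. apply (Ccv_eventually (fun _ => a 0%nat)) with 0%nat; [intros; rewrite psum_origin; auto | apply Ccv_const]. }
    rewrite Hp0. generalize (Cinv lambda1). intros. ceq; ring.
  - intros z Hz. cbv beta. rewrite Cmod_mul, Cmod_inv by auto.
    specialize (Hbound z Hz). apply Rmult_lt_reg_l with (Cmod lambda1); auto.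
    rewrite <- Rmult_assoc, Rinv_r, Rmult_1_l, Rmult_1_r by lra. auto.
  - intros z Hz. cbv beta. rewrite Cmul_Cinv_cancel by auto. generalize (p z). intros. ceq; ring.
Qed.

Lemma bernoulli x n : 0 <= x <= 1 -> 1 - INR n * x <= (1 - x) ^ n.
Proof.
  intro Hx. induction n as [|n IH]; [simpl; lra|]. rewrite S_INR. simpl.
  assert ((1 - x) * (1 - INR n * x) <= (1 - x) * (1 - x) ^ n) by (apply Rmult_le_compat_l; lra).
  pose proof (pos_INR n). nra.
Qed.

Lemma bound_from_radii Y K r0 n : 0 <= Y -> 0 <= r0 < 1 ->
  (forall r, r0 <= r < 1 -> Y * r ^ n <= K) -> Y <= K.
Proof.
  intros HY Hr0 H. apply Rle_plus_epsilon. intros e He.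
  set (s := Rmin (1 - r0) (e / (Y * INR n + 1))).
  assert (Hs : 0 < s) by (unfold s; apply Rmin_pos; [lra | apply Rdiv_lt_0_compat; pose proof (pos_INR n); nra]).
  assert (s <= 1 - r0) by apply Rmin_l.
  assert (Hse : s * (Y * INR n + 1) <= e).
  { pose proof (pos_INR n). replace e with (e / (Y * INR n + 1) * (Y * INR n + 1)) by (field; nra).
    apply Rmult_le_compat_r; [nra | apply Rmin_r]. }
  specialize (H (1 - s) ltac:(lra)).
  pose proof (bernoulli s n ltac:(lra)). pose proof (pos_INR n).
  assert (Y * (1 - INR n * s) <= Y * (1 - s) ^ n) by (apply Rmult_le_compat_l; lra).
  nra.
Qed.

Lemma Q_bound b nu M n : rad1 b -> fst nu < 0 ->
  (forall z, inU z -> Cmod z ^ n * Cmod (Csub (Cmul nu (SF b z)) (Cmul z (SF (der b) z))) < M) ->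
  forall z, inU z -> Cmod (SF b z) <= M / Cmod nu.
Proof.
  intros Rb Hnu Hkey z Hz. unfold inU in Hz.
  assert (HNv : 0 < Cmod nu) by (pose proof (Cmod_fst nu); unfold Rabs in *; destruct Rcase_abs; lra).
  assert (Rb1 := rad1_der _ Rb). assert (Rb2 := rad1_der _ Rb1).
  pose proof (Cmod_ge0 z). pose proof (Cmod_ge0 (SF b z)).
  assert (HM : 0 <= M) by (specialize (Hkey z Hz); pose proof (pow_le (Cmod z) n H);
    pose proof (Cmod_ge0 (Csub (Cmul nu (SF b z)) (Cmul z (SF (der b) z)))); nra).
  apply (bound_from_radii _ _ (Rmax (Cmod z) (1 / 2)) n); auto.
  { split; [apply Rle_trans with (1 / 2); [lra | apply Rmax_r] | apply Rmax_lub_lt; lra]. }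
  intros r [Hr1 Hr2].
  assert (Hzr : Cmod z <= r) by (eapply Rle_trans; [apply Rmax_l | exact Hr1]).
  assert (Hr : 1 / 2 <= r) by (eapply Rle_trans; [apply Rmax_r | exact Hr1]).
  set (R0 := (1 + r) / 2).
  destruct (SF_taylor b R0 Rb ltac:(unfold R0; lra)) as [C1 [HC1 HT1]].
  destruct (SF_taylor (der b) R0 Rb1 ltac:(unfold R0; lra)) as [C2 [HC2 HT2]].
  destruct (SF_bound b r Rb ltac:(lra)) as [B0 HB0].
  destruct (SF_bound (der b) r Rb1 ltac:(lra)) as [B1 HB1].
  pose proof (jack_bound (SF b) (SF (der b)) (SF (der (der b))) R0 C1 C2 r B0 B1 nu M n
    HT1 HC1 HT2 HC2 ltac:(unfold R0; lra) ltac:(intros; split; auto) Hnu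
    ltac:(intros w Hw; apply Hkey; unfold inU; lra) z Hzr) as HJ.
  rewrite N2_Cmod in HJ.
  assert (HRn : 0 < r ^ n) by (apply pow_lt; lra).
  assert (0 <= M / (r ^ n * Cmod nu)) by (apply Rmult_le_pos; [lra | apply Rlt_le, Rinv_0_lt_compat; nra]).
  assert (Cmod (SF b z) <= M / (r ^ n * Cmod nu)) by nra.
  replace (M / Cmod nu) with (M / (r ^ n * Cmod nu) * r ^ n) by (field; lra).
  apply Rmult_le_compat_r; lra.
Qed.

Lemma reduced_identity mu A q q1 z k : mu <> Cz0 ->
  Csub (Csub (Cadd Cone (Cmul A q)) (Cmul (Cinv mu) (Cmul A (Cadd (Cmul (RtoC k) q) (Cmul z q1))))) Cone
  = Cmul (Cinv mu) (Cmul A (Csub (Cmul (Csub mu (RtoC k)) q) (Cmul z q1))).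
Proof.
  intro Hmu. pose proof (N2_neq0 mu Hmu) as H. destruct mu as [x y]. unfold N2 in H; simpl in H.
  ceq; field; intro E; apply H; nra.
Qed.

Lemma reduced_inequality p p' Q Q1 mu lambda m : mu <> Cz0 -> 0 < Cmod lambda ->
  subord (fun z => Csub (p z) (Cmul (Cinv mu) (Cmul z (p' z)))) (fun z => Cadd Cone (Cmul lambda z)) ->
  (forall z, inU z -> p z = Cadd Cone (Cmul (Cpow z (S m)) (Q z)) /\
     Cmul z (p' z) = Cmul (Cpow z (S m)) (Cadd (Cmul (RtoC (INR (S m))) (Q z)) (Cmul z (Q1 z)))) ->
  forall z, inU z ->
    Cmod z ^ S m * Cmod (Csub (Cmul (Csub mu (RtoC (INR (S m)))) (Q z)) (Cmul z (Q1 z))) < Cmod mu * Cmod lambda.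
Proof.
  intros Hmu Hl0 Hsub Hdec z Hz.
  pose proof (subord_disk _ _ Hl0 Hsub z Hz) as Hw. cbv beta in Hw.
  destruct (Hdec z Hz) as [Hp Hzp]. rewrite Hp, Hzp in Hw.
  rewrite reduced_identity, !Cmod_mul, Cmod_inv, Cmod_pow in Hw by auto. pose proof (Cmod_pos mu Hmu).
  apply Rmult_lt_reg_l with (/ Cmod mu); [apply Rinv_0_lt_compat; lra|].
  replace (/ Cmod mu * (Cmod mu * Cmod lambda)) with (Cmod lambda) by (field; lra). exact Hw.
Qed.

Lemma Cmod_pow_mul_lt z k q K : inU z -> Cmod q <= K -> 0 < K -> Cmod (Cmul (Cpow z (S k)) q) < K.
Proof.
  intros Hz Hq HK. unfold inU in Hz. rewrite Cmod_mul, Cmod_pow. pose proof (Cmod_ge0 z).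
  assert (Cmod z ^ S k < 1)
    by (simpl; pose proof (pow_le (Cmod z) k H); pose proof (pow_le_one (Cmod z) k ltac:(lra)); nra).
  apply Rle_lt_trans with (Cmod z ^ S k * K).
  - apply Rmult_le_compat_l; [apply pow_le; lra | exact Hq].
  - rewrite <- (Rmult_1_l K) at 2. apply Rmult_lt_compat_r; auto.
Qed.

Theorem lemma2 (n : nat) (mu lambda : Cx) (p p' : Cx -> Cx) :
  (1 <= n)%nat ->
  mu <> Cz0 -> Re mu < INR n ->
  0 < Cmod lambda -> Cmod lambda <= 1 ->
  in_H Cone n p ->
  (forall z, inU z -> Cderiv_at p z (p' z)) ->
  subord (fun z => Csub (p z) (Cmul (Cinv mu) (Cmul z (p' z))))
         (fun z => Cadd Cone (Cmul lambda z)) ->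
  (forall lambda1 : Cx,
     Cmod lambda1 = Cmod lambda * Cmod mu / Cmod (Csub (RtoC (INR n)) mu) ->
     subord p (fun z => Cadd Cone (Cmul lambda1 z))) /\
  (forall z, inU z ->
     Cmod (Csub (p z) Cone) < Cmod lambda * Cmod mu / Cmod (Csub (RtoC (INR n)) mu)).
Proof.
  intros Hn Hmu Hre Hl0 _ [a [Ha0 [Haz Hser]]] Hd Hsub.
  destruct n as [|m]; [lia|].
  set (nu := Csub mu (RtoC (INR (S m)))).
  assert (Hnu : fst nu < 0) by (unfold nu, Csub, Cadd, Copp, RtoC; cbn [fst]; unfold Re in Hre; lra).
  assert (HK : 0 < Cmod lambda * Cmod mu / Cmod nu).
  { pose proof (Cmod_pos mu Hmu). pose proof (Cmod_pos nu ltac:(intro E; rewrite E in Hnu; cbn in Hnu; lra)).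
    apply Rdiv_lt_0_compat; nra. }
  replace (Cmod (Csub (RtoC (INR (S m))) mu)) with (Cmod nu) by apply Cmod_sub_sym.
  pose proof (H_decomposition a m p p' Ha0 Haz Hser Hd) as Hdec.
  pose proof (Q_bound _ nu _ _ (rad1_shift a (S m) (rad1_of_cv a p Hser)) Hnu
                (reduced_inequality p p' _ _ mu lambda m Hmu Hl0 Hsub Hdec)) as HQ.
  assert (Hp1 : forall z, inU z -> Cmod (Csub (p z) Cone) < Cmod lambda * Cmod mu / Cmod nu).
  { intros z Hz. destruct (Hdec z Hz) as [-> _].
    replace (Csub (Cadd Cone (Cmul (Cpow z (S m)) (SF (tail_coef a m) z))) Cone)
      with (Cmul (Cpow z (S m)) (SF (tail_coef a m) z)) by (generalize (Cpow z (S m)); intros; ceq; ring).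
    apply Cmod_pow_mul_lt; auto. rewrite Rmult_comm. apply HQ; auto. }
  split; auto.
  intros l1 Hl1. apply (subord_of_disk p a); auto.
  - intro E. rewrite E, Cmod_z0 in Hl1. lra.
  - rewrite Hl1. auto.
Qed.
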